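(* Let $w,\kappa>0$, $\beta,c\in\mathbb{R}$ with $c\ne0$, and let $\mathcal{V}_1,\mathcal{V}_2$ be real analytic with $\mathcal{V}_1'(r)=r+r^2+\mathscr{V}_1(r)$, $\mathcal{V}_2'(r)=\kappa r+\beta r^2+\mathscr{V}_2(r)$, $\mathscr{V}_k(r)/r^2\to0$ as $r\to0$. For $U=(p_1,p_2,\xi_1,\xi_2,P_1,P_2)\in\mathcal{X}$ set \[ J(U;\mathcal{V}_1,\mathcal{V}_2,w,c):=c^2\left(\xi_1+\frac{\xi_2}{w}\right)-\int_{-1}^0\big[\mathcal{V}_1'(P_2(s+1)-P_1(s))+\mathcal{V}_2'(P_1(s+1)-P_2(s))\big]ds . \] Then: (i) $(U,c)\mapsto J(U;\mathcal{V}_1,\mathcal{V}_2,w,c)$ is analytic on $\mathcal{X}\times\mathbb{R}$, and $DJ(U;\mathcal{V}_1,\mathcal{V}_2,w,c)F(U;\mathcal{V}_1,\mathcal{V}_2,w,c)=0$ for all $U\in\mathcal{D}$; (ii) $DJ(0;\mathcal{V}_1,\mathcal{V}_2,w,c)U=c^2\xi_1+\frac{c^2}{w}\xi_2+\int_{-1}^0(P_1(s)+\kappa P_2(s))ds-\int_0^1(\kappa P_1(s)+P_2(s))ds$; (iii) if $\mathcal{V}_1=\mathcal{V}_2=\mathcal{V}$ then $J(\mathcal{S}_MU;\mathcal{V},\mathcal{V},w,c)=J(U;\mathcal{V},\mathcal{V},w,c)$, and if $w=1$ then $J(\mathcal{S}_KU;\mathcal{V}_1,\mathcal{V}_2,1,c)=J(U;\mathcal{V}_1,\mathcal{V}_2,1,c)$,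 for all $U\in\mathcal{X}$; (iv) with $\chi_0=(1,1,0,0,1,1)$ (the last two entries being constant functions), $J(U+\mu\chi_0;\mathcal{V}_1,\mathcal{V}_2,w,c)=J(U;\mathcal{V}_1,\mathcal{V}_2,w,c)$ for all $U\in\mathcal{X}$, $\mu\in\mathbb{R}$; (v) $\mathscr{J}_wU:=\xi_1+\xi_2/w$ is a bounded linear functional on $\mathcal{X}$ and $J(U;\mathcal{V}_1,\mathcal{V}_2,w,c)-J(U;\mathcal{V}_1,\mathcal{V}_2,w,\grave c)=(c^2-\grave c^2)\mathscr{J}_wU$ for all $U\in\mathcal{X}$, $\grave c\in\mathbb{R}$.
   Context: $\mathcal{X}=\{(p_1,p_2,\xi_1,\xi_2,P_1,P_2)\in\mathbb{R}^4\times C([-1,1])\times C([-1,1]):P_1(0)=p_1,P_2(0)=p_2\}$ with the maximum norm; $\mathcal{D}=\mathcal{X}\cap(\mathbb{R}^4\times C^1([-1,1])\times C^1([-1,1]))$. For $U\in\mathcal{D}$, \[ F(U;\mathcal{V}_1,\mathcal{V}_2,w,c)=\Big(\xi_1,\ \xi_2,\ c^{-2}\mathcal{V}_1'(P_2(1)-p_1)-c^{-2}\mathcal{V}_2'(p_1-P_2(-1)),\ c^{-2}w\mathcal{V}_2'(P_1(1)-p_2)-c^{-2}w\mathcal{V}_1'(p_2-P_1(-1)),\ P_1',\ P_2'\Big). \] With $(RP)(v)=P(-v)$: $\mathcal{S}_M(p_1,p_2,\xi_1,\xi_2,P_1,P_2)=(-p_1,-p_2,\xi_1,\xi_2,-RP_1,-RP_2)$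 and $\mathcal{S}_K(p_1,p_2,\xi_1,\xi_2,P_1,P_2)=(-p_2,-p_1,\xi_2,\xi_1,-RP_2,-RP_1)$. *)

From Stdlib Require Import Reals Lra.
From Coquelicot Require Import Coquelicot.
Open Scope R_scope.

Fixpoint prodn (g : nat -> R) (n : nat) : R :=
  match n with O => 1 | S k => prodn g k * g k end.

Definition upd {V : Type} (hs : nat -> V) (i : nat) (v : V) : nat -> V :=
  fun j => if Nat.eqb j i then v else hs j.

Definition analytic_on {V : Type} (dom : V -> Prop) (add : V -> V -> V)
  (scal : R -> V -> V) (nrm : V -> R) (f : V -> R) : Prop :=
  forall x0, dom x0 ->
  exists (A : nat -> (nat -> V) -> R) (C : nat -> R) (r : R),
    0 < r /\
    (forall n hs hs', (forall i, (i < n)%nat -> hs i = hs' i) -> A n hs = A n hs') /\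
    (forall n i hs x y a, (i < n)%nat -> (forall j, dom (hs j)) -> dom x -> dom y ->
        A n (upd hs i (add x y)) = A n (upd hs i x) + A n (upd hs i y) /\
        A n (upd hs i (scal a x)) = a * A n (upd hs i x)) /\
    (forall n hs, (forall j, dom (hs j)) ->
        Rabs (A n hs) <= C n * prodn (fun j => nrm (hs j)) n) /\
    (forall n, 0 <= C n) /\
    ex_series (fun n => C n * r ^ n) /\
    (forall h, dom h -> nrm h < r -> is_series (fun n => A n (fun _ => h)) (f (add x0 h))).

Definition bounded_linear_on {V : Type} (dom : V -> Prop) (add : V -> V -> V)
  (scal : R -> V -> V) (nrm : V -> R) (L : V -> R) : Prop :=
  (forall x y, dom x -> dom y -> L (add x y) = L x + L y) /\
  (forall a x, dom x -> L (scal a x) = a * L x) /\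
  (exists M, forall x, dom x -> Rabs (L x) <= M * nrm x).

(* elements (p1,p2,xi1,xi2,P1,P2); P1,P2 are only looked at on [-1,1] *)
Record UX := mkUX { p1 : R; p2 : R; xi1 : R; xi2 : R; P1 : R -> R; P2 : R -> R }.

Definition Uadd (U V : UX) : UX :=
  mkUX (p1 U + p1 V) (p2 U + p2 V) (xi1 U + xi1 V) (xi2 U + xi2 V)
       (fun s => P1 U s + P1 V s) (fun s => P2 U s + P2 V s).
Definition Uscal (a : R) (U : UX) : UX :=
  mkUX (a * p1 U) (a * p2 U) (a * xi1 U) (a * xi2 U)
       (fun s => a * P1 U s) (fun s => a * P2 U s).
Definition U0 : UX := mkUX 0 0 0 0 (fun _ => 0) (fun _ => 0).

Definition cont_on_I (P : R -> R) : Prop :=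
  forall s, -1 <= s <= 1 -> forall eps, 0 < eps -> exists delta, 0 < delta /\
    forall t, -1 <= t <= 1 -> Rabs (t - s) < delta -> Rabs (P t - P s) < eps.

Definition deriv_on_I (P Q : R -> R) : Prop :=
  forall s, -1 <= s <= 1 -> forall eps, 0 < eps -> exists delta, 0 < delta /\
    forall t, -1 <= t <= 1 -> Rabs (t - s) < delta ->
      Rabs (P t - P s - Q s * (t - s)) <= eps * Rabs (t - s).

(* the ambient space R^4 x C([-1,1]) x C([-1,1]) *)
Definition inY (U : UX) : Prop := cont_on_I (P1 U) /\ cont_on_I (P2 U).
Definition inX (U : UX) : Prop := inY U /\ P1 U 0 = p1 U /\ P2 U 0 = p2 U.

Definition supI (P : R -> R) : R :=
  real (Lub_Rbar (fun y => exists s, -1 <= s <= 1 /\ y = Rabs (P s))).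

Definition Unorm (U : UX) : R :=
  Rmax (Rmax (Rmax (Rabs (p1 U)) (Rabs (p2 U))) (Rmax (Rabs (xi1 U)) (Rabs (xi2 U))))
       (Rmax (supI (P1 U)) (supI (P2 U))).

Definition is_Fderiv (f : UX -> R) (U : UX) (L : UX -> R) : Prop :=
  bounded_linear_on inY Uadd Uscal Unorm L /\
  forall eps, 0 < eps -> exists delta, 0 < delta /\
    forall h, inY h -> Unorm h < delta ->
      Rabs (f (Uadd U h) - f U - L h) <= eps * Unorm h.

Definition XRdom (x : UX * R) : Prop := inX (fst x).
Definition XRadd (x y : UX * R) : UX * R := (Uadd (fst x) (fst y), snd x + snd y).
Definition XRscal (a : R) (x : UX * R) : UX * R := (Uscal a (fst x), a * snd x).
Definition XRnorm (x : UX * R) : R := Rmax (Unorm (fst x)) (Rabs (snd x)).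

Definition Jfun (V1 V2 : R -> R) (w c : R) (U : UX) : R :=
  c ^ 2 * (xi1 U + xi2 U / w)
  - RInt (fun s => Derive V1 (P2 U (s + 1) - P1 U s) + Derive V2 (P1 U (s + 1) - P2 U s))
         (-1) 0.

(* F(U) for U in D, where Q1, Q2 are P1', P2' *)
Definition Ffield (V1 V2 : R -> R) (w c : R) (U : UX) (Q1 Q2 : R -> R) : UX :=
  mkUX (xi1 U) (xi2 U)
    (/ c ^ 2 * Derive V1 (P2 U 1 - p1 U) - / c ^ 2 * Derive V2 (p1 U - P2 U (-1)))
    (/ c ^ 2 * w * Derive V2 (P1 U 1 - p2 U) - / c ^ 2 * w * Derive V1 (p2 U - P1 U (-1)))
    Q1 Q2.

Definition SM (U : UX) : UX :=
  mkUX (- p1 U) (- p2 U) (xi1 U) (xi2 U) (fun v => - P1 U (- v)) (fun v => - P2 U (- v)).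
Definition SK (U : UX) : UX :=
  mkUX (- p2 U) (- p1 U) (xi2 U) (xi1 U) (fun v => - P2 U (- v)) (fun v => - P1 U (- v)).

Definition chi0 : UX := mkUX 1 1 0 0 (fun _ => 1) (fun _ => 1).

Definition Jw (w : R) (U : UX) : R := xi1 U + xi2 U / w.

(* Analyticity of
   V gives Cauchy estimates |V^(n)| <= B K^n n! uniformly on compact intervals, so expanding
   V1', V2' in Taylor series around the strains of U0 and integrating term by term gives the
   local power series of J in (U, c); its first-order part is the Frechet derivative DJ.
   Along F the integrand of DJ U (F U) is the s-derivative of V1'(strain1) + V2'(strain2),
   so DJ U (F U) reduces to boundary terms, which cancel c^2 Jw (F U).  The symmetries come
   from the change of variables s -> -1 - s, and adding constants leaves the strains fixed. *)

From Stdlib Require Import Reals.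
From Coquelicot Require Import Coquelicot.
From Stdlib Require Import Lra Lia Classical ClassicalEpsilon.
Open Scope R_scope.

(* Coquelicot's structures hide R from ring and field; restate the goal as an equation in R. *)
Ltac reqR := match goal with |- ?a = ?b => change (@eq R a b) end.

Lemma fact_add_le_nat k n :
  (Factorial.fact (k + n) <= Factorial.fact k * Factorial.fact n * 2 ^ (k + n))%nat.
Proof.
  revert n; induction k as [|k IHk]; intros n.
  - simpl. rewrite Nat.add_0_r.
    assert (1 <= 2 ^ n)%nat by (apply Nat.neq_0_lt_0, Nat.pow_nonzero; lia). nia.
  - induction n as [|n IHn].
    + rewrite Nat.add_0_r.
      assert (1 <= 2 ^ S k)%nat by (apply Nat.neq_0_lt_0, Nat.pow_nonzero; lia).
      simpl Factorial.fact at 3. nia.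
    + replace (S k + S n)%nat with (S (S k + n)) by lia.
      change (Factorial.fact (S (S k + n))) with (S (S k + n) * Factorial.fact (S k + n))%nat.
      specialize (IHk (S n)). replace (k + S n)%nat with (S k + n)%nat in IHk by lia.
      rewrite Nat.pow_succ_r'.
      change (Factorial.fact (S k)) with (S k * Factorial.fact k)%nat in *.
      change (Factorial.fact (S n)) with (S n * Factorial.fact n)%nat in *.
      nia.
Qed.

Lemma INR_fact_add_le k n :
  INR (Factorial.fact (k + n)) <= INR (Factorial.fact k) * INR (Factorial.fact n) * 2 ^ (k + n).
Proof.
  rewrite <- !mult_INR, <- (pow_INR 2), <- mult_INR. apply le_INR, fact_add_le_nat.
Qed.

Lemma is_series_nonneg_term_le (a : nat -> R) l :
  (forall k, 0 <= a k) -> is_series a l -> forall n, a n <= l.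
Proof.
  intros Ha Hs n.
  assert (Hsum : forall m, 0 <= sum_n a m).
  { induction m; [rewrite sum_O; apply Ha | rewrite sum_Sn; apply Rplus_le_le_0_compat; auto]. }
  apply Rle_trans with (sum_n a n).
  - destruct n; [rewrite sum_O; lra|]. rewrite sum_Sn. specialize (Hsum n). unfold plus; simpl; lra.
  - apply is_lim_seq_incr_compare; [exact Hs|].
    intros m. rewrite sum_Sn. specialize (Ha (S m)). unfold plus; simpl. lra.
Qed.

Lemma Series_abs_le_geom (u : nat -> R) c q :
  0 <= q < 1 -> (forall k, Rabs (u k) <= c * q ^ k) -> Rabs (Series u) <= c / (1 - q).
Proof.
  intros Hq Hu.
  assert (Hg : is_series (fun k => c * q ^ k) (c * / (1 - q))).
  { apply (is_series_scal_l c (fun k => q ^ k)), is_series_geom. rewrite Rabs_pos_eq; lra. }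
  assert (Hex : ex_series (fun k => Rabs (u k))).
  { apply (@ex_series_le R_AbsRing R_CompleteNormedModule _ (fun k => c * q ^ k)).
    - intros k. change (norm (Rabs (u k))) with (Rabs (Rabs (u k))). rewrite Rabs_Rabsolu. apply Hu.
    - eexists; exact Hg. }
  eapply Rle_trans; [apply Series_Rabs, Hex|].
  unfold Rdiv. rewrite <- (is_series_unique _ _ Hg).
  apply Series_le; [intros k; split; [apply Rabs_pos | apply Hu] | eexists; exact Hg].
Qed.

Lemma is_series_of_geom_rate (a : nat -> R) l C q :
  0 <= q < 1 -> (forall N, Rabs (sum_n a N - l) <= C * q ^ N) -> is_series a l.
Proof.
  intros Hq H.
  assert (Hg : is_lim_seq (fun N => C * q ^ N) 0).
  { replace (Finite 0) with (Rbar_mult C 0) by (simpl; f_equal; ring).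
    apply is_lim_seq_scal_l, is_lim_seq_geom. rewrite Rabs_pos_eq; lra. }
  enough (Hlim : is_lim_seq (sum_n a) l) by exact Hlim.
  apply (is_lim_seq_le_le (fun N => l - C * q ^ N) (sum_n a) (fun N => l + C * q ^ N)).
  - intros N. specialize (H N). apply Rabs_le_between in H. lra.
  - replace (Finite l) with (Finite (l - 0)) by (f_equal; ring).
    apply is_lim_seq_minus'; [apply is_lim_seq_const | exact Hg].
  - replace (Finite l) with (Finite (l + 0)) by (f_equal; ring).
    apply is_lim_seq_plus'; [apply is_lim_seq_const | exact Hg].
Qed.

Lemma is_series_finite4 (a : nat -> R) :
  (forall n, (4 <= n)%nat -> a n = 0) -> is_series a (a 0%nat + a 1%nat + a 2%nat + a 3%nat).
Proof.
  intros H.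
  enough (Hlim : is_lim_seq (sum_n a) (a 0%nat + a 1%nat + a 2%nat + a 3%nat)) by exact Hlim.
  apply (is_lim_seq_ext_loc (fun _ => a 0%nat + a 1%nat + a 2%nat + a 3%nat)).
  - exists 3%nat. intros n Hn. induction Hn.
    + rewrite !sum_Sn, sum_O. unfold plus; simpl. ring.
    + rewrite sum_Sn, <- IHHn, (H (S m)) by lia. unfold plus; simpl. ring.
  - apply is_lim_seq_const.
Qed.

Lemma prodn_const x n : prodn (fun _ => x) n = x ^ n.
Proof. induction n; simpl; [|rewrite IHn]; ring. Qed.

Lemma prodn_ext f g n : (forall j, (j < n)%nat -> f j = g j) -> prodn f n = prodn g n.
Proof. intros H. induction n; simpl; auto. rewrite IHn, H; auto. Qed.

Lemma prodn_scal a f n : prodn (fun j => a * f j) n = a ^ n * prodn f n.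
Proof. induction n; simpl; [|rewrite IHn]; ring. Qed.

Lemma prodn_nonneg g n : (forall j, 0 <= g j) -> 0 <= prodn g n.
Proof. intros H. induction n; simpl; [lra | apply Rmult_le_pos; auto]. Qed.

Lemma prodn_le f g n : (forall j, 0 <= f j <= g j) -> prodn f n <= prodn g n.
Proof.
  intros H. induction n; simpl; [lra|].
  apply Rmult_le_compat; auto; try apply prodn_nonneg; intros; apply H.
Qed.

Lemma Rabs_prodn_le f g n : (forall j, Rabs (f j) <= g j) -> Rabs (prodn f n) <= prodn g n.
Proof.
  intros H. induction n; simpl; [rewrite Rabs_R1; lra|].
  rewrite Rabs_mult. apply Rmult_le_compat; auto; apply Rabs_pos.
Qed.

Lemma prodn_upd {T} (f : T -> R) hs i v n : (i < n)%nat ->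
  prodn (fun j => f (upd hs i v j)) n
  = f v * prodn (fun j => if Nat.eqb j i then 1 else f (hs j)) n.
Proof.
  induction n; intros Hi; [lia|]. simpl. destruct (Nat.eq_dec i n) as [->|Hne].
  - unfold upd at 2. rewrite Nat.eqb_refl.
    rewrite (prodn_ext (fun j => f (upd hs n v j)) (fun j => f (hs j))),
            (prodn_ext (fun j => if Nat.eqb j n then 1 else f (hs j)) (fun j => f (hs j))).
    + ring.
    + intros j Hj. replace (Nat.eqb j n) with false by (symmetry; apply Nat.eqb_neq; lia). auto.
    + intros j Hj. unfold upd. replace (Nat.eqb j n) with false by (symmetry; apply Nat.eqb_neq; lia). auto.
  - rewrite IHn by lia. unfold upd at 1.
    replace (Nat.eqb n i) with false by (symmetry; apply Nat.eqb_neq; lia). ring.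
Qed.

(** * Real-analytic functions of one variable *)

Definition Cauchy_estimate (f : R -> R) (B K a b : R) : Prop :=
  forall y, a <= y <= b -> forall n,
  Rabs (Derive_n f n y) <= B * K ^ n * INR (Factorial.fact n).

Lemma multilinear_diag_pow (A : nat -> (nat -> R) -> R) :
  (forall n hs hs', (forall i, (i < n)%nat -> hs i = hs' i) -> A n hs = A n hs') ->
  (forall n i hs a x, (i < n)%nat -> A n (upd hs i (a * x)) = a * A n (upd hs i x)) ->
  forall n h, A n (fun _ => h) = h ^ n * A n (fun _ => 1).
Proof.
  intros Hdep Hhom n h.
  set (hk := fun k j => if Nat.ltb j k then h else 1).
  assert (Hk : forall k, (k <= n)%nat -> A n (hk k) = h ^ k * A n (fun _ => 1)).
  { induction k as [|k IH]; intros Hkn.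
    - rewrite Rmult_1_l. apply Hdep. intros i _. unfold hk. destruct i; reflexivity.
    - rewrite (Hdep n _ (upd (hk k) k (h * 1))).
      + rewrite Hhom by lia.
        rewrite (Hdep n _ (hk k)); [rewrite IH by lia; simpl; ring|].
        intros i _. unfold upd, hk. destruct (Nat.eqb_spec i k) as [->|]; auto.
        rewrite Nat.ltb_irrefl. reflexivity.
      + intros i _. unfold upd, hk. destruct (Nat.eqb_spec i k) as [->|Hik].
        * replace (Nat.ltb k (S k)) with true by (symmetry; apply Nat.ltb_lt; lia). ring.
        * destruct (Nat.ltb_spec i k), (Nat.ltb_spec i (S k)); auto; lia. }
  rewrite <- (Hk n (le_n n)). apply Hdep. intros i Hi. unfold hk.
  apply Nat.ltb_lt in Hi. rewrite Hi. reflexivity.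
Qed.

Lemma PSeries_derive_n_bound a r M n z :
  0 < r -> 0 <= M -> (forall m, Rabs (a m) * r ^ m <= M) -> Rabs z <= r / 4 ->
  Rabs (PSeries (PS_derive_n n a) z) <= 2 * M * INR (Factorial.fact n) * (2 / r) ^ n.
Proof.
  intros Hr HM Ha Hz. unfold PSeries.
  replace (2 * M * INR (Factorial.fact n) * (2 / r) ^ n)
    with ((M * INR (Factorial.fact n) * (2 / r) ^ n) / (1 - /2)) by field.
  apply Series_abs_le_geom; [lra|].
  intros k. unfold PS_derive_n.
  assert (Hrk : 0 < r ^ (k + n)) by (apply pow_lt; lra).
  assert (Hak : Rabs (a (k + n)%nat) <= M / r ^ (k + n)).
  { apply (Rmult_le_reg_r (r ^ (k + n))); [exact Hrk|].
    unfold Rdiv. rewrite Rmult_assoc, Rinv_l, Rmult_1_r by lra. apply Ha. }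
  assert (Hf := INR_fact_add_le k n).
  assert (Hfk : 0 < INR (Factorial.fact k)) by apply INR_fact_lt_0.
  assert (Hzk : Rabs z ^ k <= (r / 4) ^ k) by (apply pow_incr; split; [apply Rabs_pos | exact Hz]).
  assert (Hq : 0 <= INR (Factorial.fact (k + n)) / INR (Factorial.fact k))
    by (apply Rmult_le_pos; [apply pos_INR | apply Rlt_le, Rinv_0_lt_compat, Hfk]).
  rewrite !Rabs_mult, <- RPow_abs, (Rabs_pos_eq _ Hq).
  apply Rle_trans with
    (INR (Factorial.fact k) * INR (Factorial.fact n) * 2 ^ (k + n) / INR (Factorial.fact k)
     * (M / r ^ (k + n)) * (r / 4) ^ k).
  { apply Rmult_le_compat; try apply Rmult_le_pos; try apply pow_le; try apply Rabs_pos; auto.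
    apply Rmult_le_compat; try apply Rabs_pos; auto.
    apply Rmult_le_compat_r; [apply Rlt_le, Rinv_0_lt_compat, Hfk | exact Hf]. }
  right. rewrite !pow_add. unfold Rdiv. rewrite !Rpow_mult_distr, !pow_inv.
  replace (4 ^ k) with (2 ^ k * 2 ^ k) by (rewrite <- Rpow_mult_distr; f_equal; ring).
  assert (0 < 2 ^ k) by (apply pow_lt; lra). assert (0 < 2 ^ n) by (apply pow_lt; lra).
  assert (0 < r ^ k) by (apply pow_lt; lra). assert (0 < r ^ n) by (apply pow_lt; lra).
  field. repeat split; lra.
Qed.

Section RealAnalytic.

Variable V : R -> R.
Hypothesis V_analytic : analytic_on (fun _ => True) Rplus Rmult Rabs V.

Lemma analytic_power_series t : exists (a : nat -> R) r M, 0 < r /\ 0 <= M /\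
  (forall n, Rabs (a n) * r ^ n <= M) /\
  (forall h, Rabs h < r -> is_series (fun n => a n * h ^ n) (V (t + h))).
Proof.
  destruct (V_analytic t I) as (A & C & r & Hr & Hdep & Hml & Hbd & HC & Hex & Hser).
  assert (Hpow := multilinear_diag_pow A Hdep
                    (fun n i hs a x Hi => proj2 (Hml n i hs x x a Hi (fun _ => I) I I))).
  exists (fun n => A n (fun _ => 1)), r, (Series (fun n => C n * r ^ n)).
  assert (Hterm : forall n, Rabs (A n (fun _ => 1)) * r ^ n <= Series (fun n => C n * r ^ n)).
  { intros n. eapply Rle_trans;
      [|apply (is_series_nonneg_term_le (fun n => C n * r ^ n)); [|apply Series_correct, Hex]].
    - apply Rmult_le_compat_r; [apply pow_le; lra|].
      specialize (Hbd n (fun _ => 1) (fun _ => I)).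
      rewrite (prodn_const (Rabs 1)), Rabs_R1, pow1, Rmult_1_r in Hbd. exact Hbd.
    - intros k. apply Rmult_le_pos; [apply HC | apply pow_le; lra]. }
  split; [exact Hr|]. split.
  { eapply Rle_trans; [|apply (Hterm O)]. apply Rmult_le_pos; [apply Rabs_pos | simpl; lra]. }
  split; [exact Hterm|].
  intros h Hh. apply (is_series_ext (fun n => A n (fun _ => h))).
  - intros n. rewrite Hpow. reqR. ring.
  - apply Hser; [exact I | exact Hh].
Qed.

Lemma analytic_Derive_n_near t : exists r M, 0 < r /\ 0 <= M /\
  forall y, Rabs (y - t) < r / 4 ->
  (forall n, ex_derive (Derive_n V n) y) /\
  (forall n, Rabs (Derive_n V n y) <= 2 * M * INR (Factorial.fact n) * (2 / r) ^ n).
Proof.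
  destruct (analytic_power_series t) as (a & r & M & Hr & HM & Ha & Hs).
  exists r, M. do 2 (split; [assumption|]).
  assert (Hrad : Rbar_le r (CV_radius a)).
  { apply (proj1 (CV_radius_bounded a)). exists M. intros n.
    rewrite Rabs_mult, <- RPow_abs, (Rabs_pos_eq r) by lra. apply Ha. }
  assert (Hnear : forall y z, Rabs (y - t) < r -> Rabs (z - y) < r - Rabs (y - t) ->
                  Rabs (z - t) < r).
  { intros y z _ Hz. replace (z - t) with ((z - y) + (y - t)) by ring.
    eapply Rle_lt_trans; [apply Rabs_triang | lra]. }
  assert (HD : forall n z, Rabs (z - t) < r ->
                 Derive_n V n z = PSeries (PS_derive_n n a) (z - t)).
  { intros n z Hz. rewrite (Derive_n_ext_loc V (fun z => PSeries a (z - t))).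
    - unfold Rminus. etransitivity; [apply (Derive_n_comp_trans (PSeries a) n z (- t))|].
      apply Derive_n_PSeries. eapply Rbar_lt_le_trans; [|exact Hrad]. exact Hz.
    - exists (mkposreal _ (proj2 (Rlt_0_minus _ _) Hz)). intros z' Hz'.
      unfold PSeries. rewrite (is_series_unique _ _ (Hs _ (Hnear z z' Hz Hz'))).
      change R in z'. f_equal. ring. }
  intros y Hy. split.
  - intros n. assert (Hy' : Rabs (y - t) < r) by lra.
    apply (ex_derive_ext_loc (fun z => PSeries (PS_derive_n n a) (z - t))).
    + exists (mkposreal _ (proj2 (Rlt_0_minus _ _) Hy')). intros z' Hz'. change R in z'.
      symmetry. apply HD, (Hnear y z' Hy' Hz').
    + apply (ex_derive_comp (PSeries (PS_derive_n n a)) (fun z => z - t)).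
      * apply ex_derive_PSeries. rewrite CV_radius_derive_n.
        eapply Rbar_lt_le_trans; [|exact Hrad]. simpl. lra.
      * apply @ex_derive_minus; [apply ex_derive_id | apply ex_derive_const].
  - intros n. rewrite HD by lra. apply PSeries_derive_n_bound; auto. lra.
Qed.

Lemma analytic_ex_derive_n n y : ex_derive (Derive_n V n) y.
Proof.
  destruct (analytic_Derive_n_near y) as (r & M & Hr & _ & H).
  apply (H y). rewrite Rminus_eq_0, Rabs_R0. lra.
Qed.

(* Cover [m, M'] by finitely many of the discs of analytic_Derive_n_near (compactness). *)
Lemma analytic_Cauchy_estimate m M' :
  exists B K, 0 < B /\ 0 < K /\ Cauchy_estimate V B K m M'.
Proof.
  assert (Hc : forall t, {p : R * R | 0 < fst p /\ 0 <= snd p /\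
     forall y, Rabs (y - t) < fst p / 4 -> forall n,
     Rabs (Derive_n V n y) <= 2 * snd p * INR (Factorial.fact n) * (2 / fst p) ^ n}).
  { intros t. apply constructive_indefinite_description.
    destruct (analytic_Derive_n_near t) as (r & M & Hr & HM & H).
    exists (r, M). simpl. repeat split; auto. intros y Hy. apply (H y Hy). }
  assert (Hpos : forall t,
    0 < Rmin (fst (proj1_sig (Hc t)) / 4) (/ (snd (proj1_sig (Hc t)) + 1))).
  { intros t. destruct (proj2_sig (Hc t)) as (Hr & HM & _).
    apply Rmin_case; [lra | apply Rinv_0_lt_compat; lra]. }
  destruct (compactness_value_1d m M' (fun t => mkposreal _ (Hpos t))) as [d Hd].
  assert (Hd0 := cond_pos d).
  exists (2 / d), (/ (2 * d)).
  split; [apply Rdiv_lt_0_compat; lra|]. split; [apply Rinv_0_lt_compat; lra|].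
  intros y Hy n. destruct (NNPP _ (Hd y Hy)) as (t & _ & Hyt & Hdt). simpl in Hyt, Hdt.
  revert Hyt Hdt. destruct (proj2_sig (Hc t)) as (Hr & HM & Hb).
  set (r := fst (proj1_sig (Hc t))) in *. set (M := snd (proj1_sig (Hc t))) in *.
  intros Hyt Hdt.
  assert (Hdr : d <= r / 4) by (eapply Rle_trans; [exact Hdt | apply Rmin_l]).
  assert (HdM : d <= / (M + 1)) by (eapply Rle_trans; [exact Hdt | apply Rmin_r]).
  assert (Hy' : Rabs (y - t) < r / 4) by (eapply Rlt_le_trans; [exact Hyt | apply Rmin_l]).
  eapply Rle_trans; [apply (Hb y Hy' n)|].
  assert (HMd : 2 * M <= 2 / d).
  { assert (d * (M + 1) <= 1).
    { apply (Rmult_le_reg_r (/ (M + 1))); [apply Rinv_0_lt_compat; lra|].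
      rewrite Rmult_assoc, Rinv_r, Rmult_1_r, Rmult_1_l by lra. exact HdM. }
    unfold Rdiv. apply Rmult_le_compat_l; [lra|].
    apply (Rmult_le_reg_l d); [lra|]. rewrite Rinv_r by lra. nra. }
  assert (Hrd : 2 / r <= / (2 * d)).
  { unfold Rdiv. apply (Rmult_le_reg_l (r * (2 * d))); [nra|]. field_simplify; lra. }
  assert (Hfn : 0 < INR (Factorial.fact n)) by apply INR_fact_lt_0.
  assert (Hp : (2 / r) ^ n <= (/ (2 * d)) ^ n).
  { apply pow_incr. split; [apply Rlt_le, Rdiv_lt_0_compat|]; lra. }
  assert (0 <= (2 / r) ^ n) by (apply pow_le, Rlt_le, Rdiv_lt_0_compat; lra).
  apply Rle_trans with (2 / d * INR (Factorial.fact n) * (/ (2 * d)) ^ n); [|right; ring].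
  apply Rmult_le_compat; try nra.
Qed.

End RealAnalytic.

Lemma Derive_n_Derive f n x : Derive_n (Derive f) n x = Derive_n f (S n) x.
Proof.
  revert x; induction n; intros x; [reflexivity|].
  simpl. apply Derive_ext. intros t. apply IHn.
Qed.

Section AnalyticDerivative.

Variable V : R -> R.
Hypothesis V_analytic : analytic_on (fun _ => True) Rplus Rmult Rabs V.

Lemma analytic_Derive_smooth n y : ex_derive (Derive_n (Derive V) n) y.
Proof.
  apply (ex_derive_ext (Derive_n V (S n))); [intros t; symmetry; apply Derive_n_Derive|].
  apply analytic_ex_derive_n, V_analytic.
Qed.

Lemma analytic_Derive_continuous n x : continuous (Derive_n (Derive V) n) x.
Proof. apply (@ex_derive_continuous R_AbsRing R_NormedModule), analytic_Derive_smooth. Qed.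

Lemma analytic_Derive_Cauchy_estimate m M' :
  exists B K, 0 < B /\ 0 < K /\ Cauchy_estimate (Derive V) B K m M'.
Proof.
  destruct (analytic_Cauchy_estimate V V_analytic m M') as (B & K & HB & HK & H).
  exists (B * K), (2 * K). split; [nra|]. split; [lra|].
  intros y Hy n. rewrite Derive_n_Derive. eapply Rle_trans; [apply H, Hy|].
  change (Factorial.fact (S n)) with (S n * Factorial.fact n)%nat.
  rewrite mult_INR, Rpow_mult_distr. replace (K ^ S n) with (K * K ^ n) by (simpl; ring).
  assert (0 < K ^ n) by (apply pow_lt; lra).
  assert (0 < INR (Factorial.fact n)) by apply INR_fact_lt_0.
  assert (Hn : INR (S n) <= 2 ^ n).
  { clear. induction n; [simpl; lra|]. rewrite S_INR. change (2 ^ S n) with (2 * 2 ^ n).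
    assert (1 <= 2 ^ n) by (apply pow_R1_Rle; lra). lra. }
  assert (0 < B * K * K ^ n * INR (Factorial.fact n)) by (repeat apply Rmult_lt_0_compat; lra).
  apply Rle_trans with (B * K * K ^ n * INR (Factorial.fact n) * INR (S n)); [right; ring|].
  apply Rle_trans with (B * K * K ^ n * INR (Factorial.fact n) * 2 ^ n); [|right; ring].
  apply Rmult_le_compat_l; lra.
Qed.

End AnalyticDerivative.

(** * Taylor expansion with Cauchy estimates *)

Section TaylorRemainder.

Variables (f : R -> R) (B K R0 : R).
Hypothesis f_smooth : forall n y, ex_derive (Derive_n f n) y.
Hypothesis f_est : Cauchy_estimate f B K (- R0 - 1) (R0 + 1).

Definition taylor_poly (x d : R) (N : nat) : R :=
  sum_f_R0 (fun m => d ^ m / INR (Factorial.fact m) * Derive_n f m x) N.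

Lemma lagrange_remainder_bound d z N : Rabs d <= 1 -> - R0 - 1 <= z <= R0 + 1 ->
  Rabs (d ^ S N / INR (Factorial.fact (S N)) * Derive_n f (S N) z) <= B * (K * Rabs d) ^ S N.
Proof.
  intros Hd Hz.
  assert (Hf : 0 < INR (Factorial.fact (S N))) by apply INR_fact_lt_0.
  unfold Rdiv. rewrite !Rabs_mult, <- RPow_abs, Rabs_inv, (Rabs_pos_eq (INR _)) by lra.
  apply Rle_trans with
    (Rabs d ^ S N * / INR (Factorial.fact (S N)) * (B * K ^ S N * INR (Factorial.fact (S N)))).
  - apply Rmult_le_compat_l; [|apply f_est, Hz].
    apply Rmult_le_pos; [apply pow_le, Rabs_pos | apply Rlt_le, Rinv_0_lt_compat; lra].
  - right. rewrite Rpow_mult_distr. field. lra.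
Qed.

Lemma taylor_remainder_pos x d N : - R0 <= x <= R0 -> 0 < d <= 1 ->
  Rabs (f (x + d) - taylor_poly x d N) <= B * (K * Rabs d) ^ S N.
Proof.
  intros Hx Hd.
  destruct (Taylor_Lagrange f N x (x + d)) as (z & Hz & ->); [lra| |].
  - intros t _ [|k] _; [exact I | apply f_smooth].
  - replace (x + d - x) with d by ring. unfold taylor_poly.
    replace (_ + _ - _) with (d ^ S N / INR (Factorial.fact (S N)) * Derive_n f (S N) z) by ring.
    apply lagrange_remainder_bound; [rewrite Rabs_pos_eq|]; lra.
Qed.

End TaylorRemainder.

Lemma taylor_remainder_bound f B K R0 x d N :
  (forall n y, ex_derive (Derive_n f n) y) -> Cauchy_estimate f B K (- R0 - 1) (R0 + 1) ->
  - R0 <= x <= R0 -> Rabs d <= 1 ->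
  Rabs (f (x + d) - taylor_poly f x d N) <= B * (K * Rabs d) ^ S N.
Proof.
  intros Hs Hest Hx Hd.
  destruct (Rtotal_order d 0) as [Hneg | [-> | Hpos]].
  - (* reflect: g y := f (- y) satisfies the same estimates; expand it at - x with step - d *)
    set (g := fun y => f (- y)).
    assert (Hloc : forall n t, locally (- t) (fun y : R_UniformSpace =>
                     forall k, (k <= n)%nat -> ex_derive_n f k y)).
    { intros n t. apply filter_forall. intros y [|k] _; [exact I | apply Hs]. }
    assert (HDg : forall m t, Derive_n g m t = (-1) ^ m * Derive_n f m (- t))
      by (intros m t; apply Derive_n_comp_opp, Hloc).
    destruct (Taylor_Lagrange g N (- x) (- x - d)) as (z & Hz & Hg); [lra| |].
    { intros t _ k _. apply ex_derive_n_comp_opp, Hloc. }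
    replace (f (x + d)) with (g (- x - d)) by (unfold g; f_equal; ring).
    rewrite Hg. replace (- x - d - - x) with (- d) by ring.
    replace (taylor_poly f x d N)
      with (sum_f_R0 (fun m => (- d) ^ m / INR (Factorial.fact m) * Derive_n g m (- x)) N).
    2: { apply sum_eq. intros m Hm. rewrite HDg, Ropp_involutive.
         replace (- d) with ((-1) * d) by ring. rewrite Rpow_mult_distr.
         replace ((-1) ^ m * d ^ m / INR (Factorial.fact m) * ((-1) ^ m * Derive_n f m x))
           with (((-1) * (-1)) ^ m * (d ^ m / INR (Factorial.fact m) * Derive_n f m x))
           by (rewrite Rpow_mult_distr; unfold Rdiv; ring).
         replace ((-1) * (-1)) with 1 by ring. rewrite pow1. ring. }
    replace (_ + _ - _)
      with ((-1) ^ S N * ((- d) ^ S N / INR (Factorial.fact (S N)) * Derive_n f (S N) (- z)))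
      by (rewrite HDg; unfold Rdiv; ring).
    rewrite Rabs_mult, <- RPow_abs, Rabs_m1, pow1, Rmult_1_l, <- (Rabs_Ropp d).
    apply (lagrange_remainder_bound f B K R0 Hest); [rewrite Rabs_Ropp; exact Hd|].
    assert (Rabs d = - d) by (apply Rabs_left, Hneg). lra.
  - rewrite Rplus_0_r, Rabs_R0, Rmult_0_r, pow_i, Rmult_0_r by lia.
    replace (taylor_poly f x 0 N) with (f x); [rewrite Rminus_eq_0, Rabs_R0; lra|].
    unfold taylor_poly. induction N; [simpl; field|].
    simpl sum_f_R0. rewrite <- IHN. change (0 ^ S N) with (0 * 0 ^ N). unfold Rdiv. ring.
  - apply (taylor_remainder_pos f B K R0); auto. split; [lra|].
    rewrite Rabs_pos_eq in Hd; lra.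
Qed.

Definition clamp (s : R) : R := Rmax (-1) (Rmin 1 s).

Lemma clamp_in s : -1 <= clamp s <= 1.
Proof. unfold clamp. split; [apply Rmax_l | apply Rmax_lub; [lra | apply Rmin_l]]. Qed.

Lemma clamp_id s : -1 <= s <= 1 -> clamp s = s.
Proof. intros Hs. unfold clamp. rewrite Rmin_right, Rmax_right; lra. Qed.

Lemma clamp_lipschitz s t : Rabs (clamp t - clamp s) <= Rabs (t - s).
Proof. unfold clamp, Rmax, Rmin. repeat destruct Rle_dec; unfold Rabs; repeat destruct Rcase_abs; lra. Qed.

Definition extI (P : R -> R) (s : R) : R := P (clamp s).

Lemma extI_eq P s : -1 <= s <= 1 -> extI P s = P s.
Proof. intros. unfold extI. rewrite clamp_id; auto. Qed.

Lemma extI_continuous P : cont_on_I P -> forall x, continuous (extI P) x.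
Proof.
  intros HP x. apply continuity_pt_filterlim. intros eps Heps.
  destruct (HP (clamp x) (clamp_in x) eps Heps) as (d & Hd & H).
  exists d. split; [exact Hd|]. intros y [_ Hy]. unfold R_dist, extI in *.
  apply H; [apply clamp_in | eapply Rle_lt_trans; [apply clamp_lipschitz | exact Hy]].
Qed.

Lemma cont_on_I_bounded P : cont_on_I P -> exists M, forall s, -1 <= s <= 1 -> Rabs (P s) <= M.
Proof.
  intros HP. destruct (continuity_ab_maj (fun s => Rabs (extI P s)) (-1) 1) as (x & Hx & _).
  - lra.
  - intros c _. apply continuity_pt_filterlim, (continuous_comp (extI P) Rabs).
    + apply extI_continuous, HP.
    + apply continuous_Rabs.
  - exists (Rabs (extI P x)). intros s Hs. rewrite <- (extI_eq P s Hs). apply Hx, Hs.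
Qed.

Lemma cont_on_I_add P Q : cont_on_I P -> cont_on_I Q -> cont_on_I (fun s => P s + Q s).
Proof.
  intros HP HQ s Hs eps He.
  destruct (HP s Hs (eps / 2)) as (d1 & Hd1 & K1); [lra|].
  destruct (HQ s Hs (eps / 2)) as (d2 & Hd2 & K2); [lra|].
  exists (Rmin d1 d2). split; [apply Rmin_case; lra|]. intros t Ht Hts.
  specialize (K1 t Ht (Rlt_le_trans _ _ _ Hts (Rmin_l _ _))).
  specialize (K2 t Ht (Rlt_le_trans _ _ _ Hts (Rmin_r _ _))).
  replace (P t + Q t - (P s + Q s)) with ((P t - P s) + (Q t - Q s)) by ring.
  eapply Rle_lt_trans; [apply Rabs_triang | lra].
Qed.

Lemma cont_on_I_scal P a : cont_on_I P -> cont_on_I (fun s => a * P s).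
Proof.
  intros HP s Hs eps He. assert (Ha := Rabs_pos a).
  destruct (HP s Hs (eps / (Rabs a + 1))) as (d & Hd & K); [apply Rdiv_lt_0_compat; lra|].
  exists d. split; [exact Hd|]. intros t Ht Hts. specialize (K t Ht Hts).
  replace (a * P t - a * P s) with (a * (P t - P s)) by ring. rewrite Rabs_mult.
  apply Rle_lt_trans with (Rabs a * (eps / (Rabs a + 1))); [apply Rmult_le_compat_l; lra|].
  apply Rlt_le_trans with ((Rabs a + 1) * (eps / (Rabs a + 1))); [|right; field; lra].
  apply Rmult_lt_compat_r; [apply Rdiv_lt_0_compat|]; lra.
Qed.

Lemma supI_spec P : (exists M, forall s, -1 <= s <= 1 -> Rabs (P s) <= M) ->
  (forall s, -1 <= s <= 1 -> Rabs (P s) <= supI P) /\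
  (forall B, (forall s, -1 <= s <= 1 -> Rabs (P s) <= B) -> supI P <= B).
Proof.
  intros [M HM]. unfold supI.
  destruct (Lub_Rbar_correct (fun y => exists s, -1 <= s <= 1 /\ y = Rabs (P s))) as [Hub Hlub].
  destruct (Lub_Rbar (fun y => exists s, -1 <= s <= 1 /\ y = Rabs (P s))) as [l| |].
  - split.
    + intros s Hs. apply (Hub (Rabs (P s))). exists s; auto.
    + intros B HB. apply (Hlub (Finite B)). intros y [s [Hs ->]]. apply HB, Hs.
  - exfalso. apply (Hlub (Finite M)). intros y [s [Hs ->]]. apply HM, Hs.
  - exfalso. apply (Hub (Rabs (P 0))). exists 0; split; [lra | reflexivity].
Qed.

Lemma supI_scal P a : cont_on_I P -> supI (fun s => a * P s) <= Rabs a * supI P.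
Proof.
  intros HP. destruct (supI_spec _ (cont_on_I_bounded _ HP)) as [Hle _].
  assert (Hb : forall s, -1 <= s <= 1 -> Rabs (a * P s) <= Rabs a * supI P).
  { intros s Hs. rewrite Rabs_mult. apply Rmult_le_compat_l; [apply Rabs_pos | apply Hle, Hs]. }
  apply (proj2 (supI_spec _ (ex_intro _ _ Hb))), Hb.
Qed.

Lemma Unorm_p1 U : Rabs (p1 U) <= Unorm U.
Proof. unfold Unorm. do 2 (eapply Rle_trans; [|apply Rmax_l]). apply Rmax_l. Qed.
Lemma Unorm_p2 U : Rabs (p2 U) <= Unorm U.
Proof. unfold Unorm. do 2 (eapply Rle_trans; [|apply Rmax_l]). apply Rmax_r. Qed.
Lemma Unorm_xi1 U : Rabs (xi1 U) <= Unorm U.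
Proof. unfold Unorm. eapply Rle_trans; [|apply Rmax_l]. eapply Rle_trans; [|apply Rmax_r]. apply Rmax_l. Qed.
Lemma Unorm_xi2 U : Rabs (xi2 U) <= Unorm U.
Proof. unfold Unorm. eapply Rle_trans; [|apply Rmax_l]. eapply Rle_trans; [|apply Rmax_r]. apply Rmax_r. Qed.
Lemma Unorm_supI1 U : supI (P1 U) <= Unorm U.
Proof. unfold Unorm. eapply Rle_trans; [|apply Rmax_r]. apply Rmax_l. Qed.
Lemma Unorm_supI2 U : supI (P2 U) <= Unorm U.
Proof. unfold Unorm. eapply Rle_trans; [|apply Rmax_r]. apply Rmax_r. Qed.

Lemma Unorm_nonneg U : 0 <= Unorm U.
Proof. eapply Rle_trans; [apply Rabs_pos | apply Unorm_p1]. Qed.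

Lemma Unorm_P1 U : inY U -> forall s, -1 <= s <= 1 -> Rabs (P1 U s) <= Unorm U.
Proof.
  intros [H1 _] s Hs. eapply Rle_trans; [|apply Unorm_supI1].
  apply (proj1 (supI_spec _ (cont_on_I_bounded _ H1))), Hs.
Qed.

Lemma Unorm_P2 U : inY U -> forall s, -1 <= s <= 1 -> Rabs (P2 U s) <= Unorm U.
Proof.
  intros [_ H2] s Hs. eapply Rle_trans; [|apply Unorm_supI2].
  apply (proj1 (supI_spec _ (cont_on_I_bounded _ H2))), Hs.
Qed.

Lemma Unorm_scal U a : inY U -> Unorm (Uscal a U) <= Rabs a * Unorm U.
Proof.
  intros [H1 H2]. assert (Ha := Rabs_pos a). unfold Unorm at 1. simpl.
  repeat apply Rmax_lub; try (rewrite Rabs_mult; apply Rmult_le_compat_l; auto).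
  - apply Unorm_p1.
  - apply Unorm_p2.
  - apply Unorm_xi1.
  - apply Unorm_xi2.
  - eapply Rle_trans; [apply supI_scal, H1 | apply Rmult_le_compat_l, Unorm_supI1; auto].
  - eapply Rle_trans; [apply supI_scal, H2 | apply Rmult_le_compat_l, Unorm_supI2; auto].
Qed.

Lemma inY_add U V : inY U -> inY V -> inY (Uadd U V).
Proof. intros [A1 A2] [B1 B2]. split; apply cont_on_I_add; auto. Qed.

Lemma inY_scal U a : inY U -> inY (Uscal a U).
Proof. intros [A1 A2]. split; apply cont_on_I_scal; auto. Qed.

Lemma inY_U0 : inY U0.
Proof.
  split; intros s _ eps He; exists 1; split; [lra | |lra|];
    intros t _ _; simpl; rewrite Rminus_eq_0, Rabs_R0; lra.
Qed.

Lemma Jw_add w U V : 0 < w -> Jw w (Uadd U V) = Jw w U + Jw w V.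
Proof. intros. unfold Jw; simpl. field. lra. Qed.

Lemma Jw_scal w a U : 0 < w -> Jw w (Uscal a U) = a * Jw w U.
Proof. intros. unfold Jw; simpl. field. lra. Qed.

Lemma Jw_bound w U : 0 < w -> Rabs (Jw w U) <= (1 + / w) * Unorm U.
Proof.
  intros Hw. unfold Jw, Rdiv. eapply Rle_trans; [apply Rabs_triang|].
  rewrite Rabs_mult, Rabs_inv, (Rabs_pos_eq w) by lra.
  assert (H1 := Unorm_xi1 U). assert (H2 := Unorm_xi2 U).
  assert (0 < / w) by (apply Rinv_0_lt_compat; lra).
  assert (Rabs (xi2 U) * / w <= Unorm U * / w) by (apply Rmult_le_compat_r; lra). nra.
Qed.

Lemma Jw_bounded_linear w : 0 < w -> bounded_linear_on inX Uadd Uscal Unorm (Jw w).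
Proof.
  intros Hw. split; [|split].
  - intros x y _ _. apply Jw_add, Hw.
  - intros a x _. apply Jw_scal, Hw.
  - exists (1 + / w). intros x _. apply Jw_bound, Hw.
Qed.

Lemma XRnorm_fst x : Unorm (fst x) <= XRnorm x.
Proof. apply Rmax_l. Qed.

Lemma XRnorm_snd x : Rabs (snd x) <= XRnorm x.
Proof. apply Rmax_r. Qed.

Lemma XRnorm_nonneg x : 0 <= XRnorm x.
Proof. eapply Rle_trans; [apply Rabs_pos | apply XRnorm_snd]. Qed.

Definition cont_ext (f : R -> R) : Prop :=
  exists g : R -> R, (forall x, continuous g x) /\ forall s, -1 <= s <= 0 -> f s = g s.

Lemma cont_ext_ex_RInt f : cont_ext f -> ex_RInt f (-1) 0.
Proof.
  intros [g [Hg Hfg]]. apply (ex_RInt_ext g).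
  - intros x Hx. rewrite Rmin_left, Rmax_right in Hx by lra. symmetry; apply Hfg; lra.
  - apply (@ex_RInt_continuous R_CompleteNormedModule). intros; apply Hg.
Qed.

Lemma cont_ext_ext f g : cont_ext f -> (forall s, -1 <= s <= 0 -> f s = g s) -> cont_ext g.
Proof. intros [f' [Hf Ef]] E. exists f'. split; auto. intros s Hs. rewrite <- E; auto. Qed.

Lemma cont_ext_const a : cont_ext (fun _ => a).
Proof. exists (fun _ => a). split; [intros; apply continuous_const | auto]. Qed.

Lemma cont_ext_comp h f : (forall x, continuous h x) -> cont_ext f -> cont_ext (fun s => h (f s)).
Proof.
  intros Hh [f' [Hf Ef]]. exists (fun s => h (f' s)). split.
  - intros x. apply (continuous_comp f' h); auto.
  - intros s Hs. rewrite Ef; auto.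
Qed.

Lemma cont_ext_plus f g : cont_ext f -> cont_ext g -> cont_ext (fun s => f s + g s).
Proof.
  intros [f' [Hf Ef]] [g' [Hg Eg]]. exists (fun s => f' s + g' s). split.
  - intros x. apply (continuous_plus f' g'); auto.
  - intros s Hs. rewrite Ef, Eg; auto.
Qed.

Lemma cont_ext_mult f g : cont_ext f -> cont_ext g -> cont_ext (fun s => f s * g s).
Proof.
  intros [f' [Hf Ef]] [g' [Hg Eg]]. exists (fun s => f' s * g' s). split.
  - intros x. apply (continuous_mult f' g'); auto.
  - intros s Hs. rewrite Ef, Eg; auto.
Qed.

Lemma cont_ext_minus f g : cont_ext f -> cont_ext g -> cont_ext (fun s => f s - g s).
Proof.
  intros [f' [Hf Ef]] [g' [Hg Eg]]. exists (fun s => f' s - g' s). split.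
  - intros x. apply (continuous_minus f' g'); auto.
  - intros s Hs. rewrite Ef, Eg; auto.
Qed.

Lemma cont_ext_prodn (F : nat -> R -> R) n :
  (forall j, cont_ext (F j)) -> cont_ext (fun s => prodn (fun j => F j s) n).
Proof.
  intros HF. induction n; simpl; [apply cont_ext_const|].
  apply (cont_ext_mult (fun s => prodn (fun j => F j s) n) (F n)); auto.
Qed.

Lemma cont_ext_pow f n : cont_ext f -> cont_ext (fun s => f s ^ n).
Proof.
  intros Hf. apply (cont_ext_ext (fun s => prodn (fun _ => f s) n)).
  - apply (cont_ext_prodn (fun _ => f)). auto.
  - intros; apply prodn_const.
Qed.

Lemma cont_ext_sum (F : nat -> R -> R) N :
  (forall n, cont_ext (F n)) -> cont_ext (fun s => sum_f_R0 (fun n => F n s) N).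
Proof.
  intros HF. induction N; simpl; [apply HF|].
  apply (cont_ext_plus (fun s => sum_f_R0 (fun n => F n s) N) (F (S N))); auto.
Qed.

Lemma cont_ext_of_I P : cont_on_I P -> cont_ext P.
Proof.
  intros HP. exists (extI P). split; [apply extI_continuous, HP|].
  intros s Hs. rewrite extI_eq; auto. lra.
Qed.

Lemma cont_ext_of_I_shift P : cont_on_I P -> cont_ext (fun s => P (s + 1)).
Proof.
  intros HP. exists (fun s => extI P (s + 1)). split.
  - intros x. apply (continuous_comp (fun s => s + 1) (extI P)).
    + apply (continuous_plus (fun s => s) (fun _ => 1)); [apply continuous_id | apply continuous_const].
    + apply extI_continuous, HP.
  - intros s Hs. rewrite extI_eq; auto. lra.
Qed.

Lemma RInt_plusR f g a b : ex_RInt f a b -> ex_RInt g a b ->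
  RInt (fun x => f x + g x) a b = RInt f a b + RInt g a b.
Proof. apply (RInt_plus f g). Qed.

Lemma RInt_minusR f g a b : ex_RInt f a b -> ex_RInt g a b ->
  RInt (fun x => f x - g x) a b = RInt f a b - RInt g a b.
Proof. apply (RInt_minus f g). Qed.

Lemma RInt_scalR f k a b : ex_RInt f a b -> RInt (fun x => k * f x) a b = k * RInt f a b.
Proof. apply (RInt_scal f a b k). Qed.

Lemma RInt_abs_le (f : R -> R) M : ex_RInt f (-1) 0 -> (forall s, -1 <= s <= 0 -> Rabs (f s) <= M) ->
  Rabs (RInt f (-1) 0) <= M.
Proof.
  intros Hf HM.
  assert (Hc : forall c : R, RInt (fun _ => c) (-1) 0 = c).
  { intros c. rewrite RInt_const. unfold scal; simpl; unfold mult; simpl. ring. }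
  assert (Hb : forall x, -1 < x < 0 -> - M <= f x <= M).
  { intros x Hx. apply Rabs_le_between, HM. lra. }
  apply Rabs_le. split.
  - rewrite <- (Hc (- M)). apply RInt_le; [lra | apply ex_RInt_const | exact Hf | apply Hb].
  - rewrite <- (Hc M). apply RInt_le; [lra | exact Hf | apply ex_RInt_const | apply Hb].
Qed.

Lemma RInt_sum_f_R0 (F : nat -> R -> R) N : (forall n, cont_ext (F n)) ->
  sum_n (fun n => RInt (F n) (-1) 0) N = RInt (fun s => sum_f_R0 (fun n => F n s) N) (-1) 0.
Proof.
  intros HF. induction N; [rewrite sum_O; reflexivity|].
  rewrite sum_Sn, IHN. simpl sum_f_R0.
  rewrite RInt_plusR; [reflexivity | |]; apply cont_ext_ex_RInt; [apply cont_ext_sum|]; auto.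
Qed.

Lemma cont_ext_reflect f : cont_ext f -> cont_ext (fun s => f (- s - 1)).
Proof.
  intros [g [Hg Hfg]]. exists (fun s => g (- s - 1)). split.
  - intros x. apply (continuous_comp (fun s => - s - 1) g); [|apply Hg].
    apply (@ex_derive_continuous R_AbsRing R_NormedModule (fun s : R => - s - 1)). auto_derive. auto.
  - intros s Hs. apply Hfg. lra.
Qed.

Lemma RInt_reflect f : cont_ext f -> RInt (fun s => f (- s - 1)) (-1) 0 = RInt f (-1) 0.
Proof.
  intros Hf.
  assert (Hex : ex_RInt f (-1 * -1 + -1) (-1 * 0 + -1)).
  { replace (-1 * -1 + -1) with 0 by ring. replace (-1 * 0 + -1) with (-1) by ring.
    apply ex_RInt_swap, cont_ext_ex_RInt, Hf. }
  assert (HC := RInt_comp_lin f (-1) (-1) (-1) 0 Hex).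
  replace (-1 * -1 + -1) with 0 in HC by ring. replace (-1 * 0 + -1) with (-1) in HC by ring.
  rewrite <- (opp_RInt_swap f) in HC by (apply cont_ext_ex_RInt, Hf).
  rewrite (RInt_ext _ (fun y => -1 * f (- y - 1))) in HC.
  2: { intros x _. unfold scal; simpl; unfold mult; simpl. do 2 f_equal. ring. }
  rewrite RInt_scalR in HC by (apply cont_ext_ex_RInt, cont_ext_reflect, Hf).
  unfold opp in HC; simpl in HC. lra.
Qed.

Section IntegratedTaylorSeries.

Variables (G : R -> R) (B K R0 : R) (x0 : R -> R).
Hypothesis G_smooth : forall n y, ex_derive (Derive_n G n) y.
Hypothesis B_pos : 0 < B.
Hypothesis K_pos : 0 < K.
Hypothesis G_est : Cauchy_estimate G B K (- R0 - 1) (R0 + 1).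
Hypothesis x0_cont : cont_ext x0.
Hypothesis x0_bound : forall s, -1 <= s <= 0 -> Rabs (x0 s) <= R0.

Definition taylor_coef (n : nat) (s : R) : R := Derive_n G n (x0 s) / INR (Factorial.fact n).

Lemma Derive_n_continuous n x : continuous (Derive_n G n) x.
Proof. apply (@ex_derive_continuous R_AbsRing R_NormedModule), G_smooth. Qed.

Lemma taylor_coef_cont_ext n : cont_ext (taylor_coef n).
Proof.
  apply (cont_ext_mult (fun s => Derive_n G n (x0 s)) (fun _ => / INR (Factorial.fact n))).
  - apply cont_ext_comp; [apply Derive_n_continuous | exact x0_cont].
  - apply cont_ext_const.
Qed.

Lemma taylor_coef_bound n s : -1 <= s <= 0 -> Rabs (taylor_coef n s) <= B * K ^ n.
Proof.
  intros Hs. unfold taylor_coef. assert (Hf : 0 < INR (Factorial.fact n)) by apply INR_fact_lt_0.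
  unfold Rdiv. rewrite Rabs_mult, Rabs_inv, (Rabs_pos_eq (INR _)) by lra.
  apply (Rmult_le_reg_r (INR (Factorial.fact n))); [exact Hf|].
  rewrite Rmult_assoc, Rinv_l, Rmult_1_r by lra. apply G_est.
  specialize (x0_bound s Hs). apply Rabs_le_between in x0_bound. lra.
Qed.

(* The partial sums converge geometrically with ratio K rho <= 1/2, uniformly in s. *)
Lemma is_series_RInt_taylor d rho : cont_ext d -> 0 <= rho <= 1 -> K * rho <= 1 / 2 ->
  (forall s, -1 <= s <= 0 -> Rabs (d s) <= rho) ->
  is_series (fun n => RInt (fun s => taylor_coef n s * d s ^ n) (-1) 0)
            (RInt (fun s => G (x0 s + d s)) (-1) 0).
Proof.
  intros Hd Hrho HKr Hdb.
  assert (Hterm : forall n, cont_ext (fun s => taylor_coef n s * d s ^ n))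
    by (intros n; apply cont_ext_mult; [apply taylor_coef_cont_ext | apply cont_ext_pow, Hd]).
  apply (is_series_of_geom_rate _ _ (B / 2) (1 / 2)); [lra|].
  intros N. rewrite RInt_sum_f_R0 by exact Hterm.
  rewrite <- RInt_minusR.
  2: apply cont_ext_ex_RInt, cont_ext_sum, Hterm.
  2: apply cont_ext_ex_RInt, (cont_ext_comp G (fun s => x0 s + d s));
       [apply (Derive_n_continuous 0) | apply cont_ext_plus; auto].
  apply RInt_abs_le.
  { apply cont_ext_ex_RInt, cont_ext_minus; [apply cont_ext_sum, Hterm|].
    apply (cont_ext_comp G (fun s => x0 s + d s));
      [apply (Derive_n_continuous 0) | apply cont_ext_plus; auto]. }
  intros s Hs. rewrite Rabs_minus_sym.
  replace (sum_f_R0 (fun n => taylor_coef n s * d s ^ n) N) with (taylor_poly G (x0 s) (d s) N)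
    by (apply sum_eq; intros i _; unfold taylor_coef, Rdiv; ring).
  specialize (x0_bound s Hs). specialize (Hdb s Hs).
  eapply Rle_trans.
  { apply (taylor_remainder_bound G B K R0); auto; [apply Rabs_le_between in x0_bound|]; lra. }
  assert (Hds : 0 <= K * Rabs (d s) <= 1 / 2).
  { assert (Ha := Rabs_pos (d s)). split; [nra|].
    apply Rle_trans with (K * rho); [apply Rmult_le_compat_l|]; lra. }
  apply Rle_trans with (B * (1 / 2) ^ S N); [apply Rmult_le_compat_l, pow_incr; lra|].
  right. simpl. field.
Qed.

End IntegratedTaylorSeries.

(** * The functional J *)

Definition strain1 (U : UX) (s : R) : R := P2 U (s + 1) - P1 U s.
Definition strain2 (U : UX) (s : R) : R := P1 U (s + 1) - P2 U s.

Lemma Jfun_strain V1 V2 w c U : Jfun V1 V2 w c U =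
  c ^ 2 * Jw w U - RInt (fun s => Derive V1 (strain1 U s) + Derive V2 (strain2 U s)) (-1) 0.
Proof. reflexivity. Qed.

Lemma strain1_add U V s : strain1 (Uadd U V) s = strain1 U s + strain1 V s.
Proof. unfold strain1; simpl. ring. Qed.
Lemma strain2_add U V s : strain2 (Uadd U V) s = strain2 U s + strain2 V s.
Proof. unfold strain2; simpl. ring. Qed.
Lemma strain1_scal a U s : strain1 (Uscal a U) s = a * strain1 U s.
Proof. unfold strain1; simpl. ring. Qed.
Lemma strain2_scal a U s : strain2 (Uscal a U) s = a * strain2 U s.
Proof. unfold strain2; simpl. ring. Qed.

Lemma strain1_cont_ext U : inY U -> cont_ext (strain1 U).
Proof.
  intros [H1 H2]. apply (cont_ext_minus (fun s => P2 U (s + 1)) (P1 U));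
    [apply cont_ext_of_I_shift | apply cont_ext_of_I]; auto.
Qed.

Lemma strain2_cont_ext U : inY U -> cont_ext (strain2 U).
Proof.
  intros [H1 H2]. apply (cont_ext_minus (fun s => P1 U (s + 1)) (P2 U));
    [apply cont_ext_of_I_shift | apply cont_ext_of_I]; auto.
Qed.

Lemma strain1_bound U : inY U -> forall s, -1 <= s <= 0 -> Rabs (strain1 U s) <= 2 * Unorm U.
Proof.
  intros HU s Hs. unfold strain1, Rminus. eapply Rle_trans; [apply Rabs_triang|].
  rewrite Rabs_Ropp.
  assert (Rabs (P2 U (s + 1)) <= Unorm U) by (apply Unorm_P2; auto; lra).
  assert (Rabs (P1 U s) <= Unorm U) by (apply Unorm_P1; auto; lra). lra.
Qed.

Lemma strain2_bound U : inY U -> forall s, -1 <= s <= 0 -> Rabs (strain2 U s) <= 2 * Unorm U.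
Proof.
  intros HU s Hs. unfold strain2, Rminus. eapply Rle_trans; [apply Rabs_triang|].
  rewrite Rabs_Ropp.
  assert (Rabs (P1 U (s + 1)) <= Unorm U) by (apply Unorm_P1; auto; lra).
  assert (Rabs (P2 U s) <= Unorm U) by (apply Unorm_P2; auto; lra). lra.
Qed.

(* The homogeneous parts of (c0 + g)^2 (J0 + Jw w H) in h = (H, g), as multilinear forms. *)
Definition quad_form (w c0 J0 : R) (n : nat) (hs : nat -> UX * R) : R :=
  match n with
  | 0 => c0 ^ 2 * J0
  | 1 => 2 * c0 * snd (hs 0%nat) * J0 + c0 ^ 2 * Jw w (fst (hs 0%nat))
  | 2 => snd (hs 0%nat) * snd (hs 1%nat) * J0 + 2 * c0 * snd (hs 0%nat) * Jw w (fst (hs 1%nat))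
  | 3 => snd (hs 0%nat) * snd (hs 1%nat) * Jw w (fst (hs 2%nat))
  | _ => 0
  end.

Lemma quad_form_ext w c0 J0 n hs hs' : (forall i, (i < n)%nat -> hs i = hs' i) ->
  quad_form w c0 J0 n hs = quad_form w c0 J0 n hs'.
Proof. intros H. destruct n as [|[|[|[|n]]]]; simpl; rewrite ?(H 0%nat), ?(H 1%nat), ?(H 2%nat) by lia; auto. Qed.

Lemma quad_form_multilinear w c0 J0 n i hs x y a : 0 < w -> (i < n)%nat ->
  quad_form w c0 J0 n (upd hs i (XRadd x y))
    = quad_form w c0 J0 n (upd hs i x) + quad_form w c0 J0 n (upd hs i y) /\
  quad_form w c0 J0 n (upd hs i (XRscal a x)) = a * quad_form w c0 J0 n (upd hs i x).
Proof.
  intros Hw Hi.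
  destruct n as [|[|[|[|n]]]]; try lia; destruct i as [|[|[|i]]]; try lia;
    unfold upd; simpl; unfold XRadd, XRscal; simpl; rewrite ?Jw_add, ?Jw_scal by lra;
    split; try ring; destruct n; simpl; ring.
Qed.

Lemma quad_form_sum w c0 J0 h :
  quad_form w c0 J0 0 (fun _ => h) + quad_form w c0 J0 1 (fun _ => h)
  + quad_form w c0 J0 2 (fun _ => h) + quad_form w c0 J0 3 (fun _ => h)
  = (c0 + snd h) ^ 2 * (J0 + Jw w (fst h)).
Proof. simpl. ring. Qed.

Definition quad_bound (w c0 J0 : R) : R :=
  c0 ^ 2 * Rabs J0 + 2 * Rabs c0 * Rabs J0 + c0 ^ 2 * (1 + / w) + Rabs J0
  + 2 * Rabs c0 * (1 + / w) + (1 + / w).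

Lemma quad_bound_nonneg w c0 J0 : 0 < w -> 0 <= quad_bound w c0 J0.
Proof.
  intros Hw. unfold quad_bound. assert (0 < / w) by (apply Rinv_0_lt_compat; lra).
  assert (0 <= c0 ^ 2) by apply pow2_ge_0. assert (A0 := Rabs_pos J0). assert (A1 := Rabs_pos c0).
  assert (0 <= c0 ^ 2 * Rabs J0) by (apply Rmult_le_pos; lra).
  assert (0 <= Rabs c0 * Rabs J0) by (apply Rmult_le_pos; lra).
  assert (0 <= c0 ^ 2 * (1 + / w)) by (apply Rmult_le_pos; lra).
  assert (0 <= Rabs c0 * (1 + / w)) by (apply Rmult_le_pos; lra). lra.
Qed.

Definition quad_coef (w c0 J0 : R) (n : nat) : R :=
  match n with
  | 0 => c0 ^ 2 * Rabs J0
  | 1 => 2 * Rabs c0 * Rabs J0 + c0 ^ 2 * (1 + / w)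
  | 2 => Rabs J0 + 2 * Rabs c0 * (1 + / w)
  | 3 => 1 + / w
  | _ => 0
  end.

Lemma quad_form_coef_bound w c0 J0 n hs : 0 < w ->
  Rabs (quad_form w c0 J0 n hs) <= quad_coef w c0 J0 n * prodn (fun j => XRnorm (hs j)) n.
Proof.
  intros Hw. set (Lw := 1 + / w). set (N := fun j => XRnorm (hs j)).
  assert (HLw : 0 < Lw) by (unfold Lw; assert (0 < / w) by (apply Rinv_0_lt_compat; lra); lra).
  assert (HJ : forall j, Rabs (Jw w (fst (hs j))) <= Lw * N j).
  { intros j. eapply Rle_trans; [apply Jw_bound, Hw|].
    apply Rmult_le_compat_l; [lra | apply XRnorm_fst]. }
  assert (Hg : forall j, Rabs (snd (hs j)) <= N j) by (intros; apply XRnorm_snd).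
  assert (Hn : forall j, 0 <= N j) by (intros; apply XRnorm_nonneg).
  assert (HJ' : forall j, 0 <= Rabs (Jw w (fst (hs j)))) by (intros; apply Rabs_pos).
  assert (Hg' : forall j, 0 <= Rabs (snd (hs j))) by (intros; apply Rabs_pos).
  assert (A0 := Rabs_pos J0). assert (A1 := Rabs_pos c0). assert (A2 : 0 <= c0 ^ 2) by apply pow2_ge_0.
  assert (Hc2 : Rabs (c0 ^ 2) = c0 ^ 2) by (apply Rabs_pos_eq; lra).
  destruct n as [|[|[|[|n]]]]; cbn [quad_form quad_coef prodn]; fold Lw; rewrite ?Rmult_1_l.
  - rewrite Rabs_mult, Hc2. lra.
  - eapply Rle_trans; [apply Rabs_triang|]. rewrite !Rabs_mult, Hc2, (Rabs_pos_eq 2) by lra.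
    assert (Rabs c0 * Rabs (snd (hs 0%nat)) * Rabs J0 <= Rabs c0 * N 0%nat * Rabs J0)
      by (apply Rmult_le_compat_r, Rmult_le_compat_l; auto).
    assert (c0 ^ 2 * Rabs (Jw w (fst (hs 0%nat))) <= c0 ^ 2 * (Lw * N 0%nat))
      by (apply Rmult_le_compat_l; auto).
    lra.
  - eapply Rle_trans; [apply Rabs_triang|]. rewrite !Rabs_mult, (Rabs_pos_eq 2) by lra.
    assert (Rabs (snd (hs 0%nat)) * Rabs (snd (hs 1%nat)) * Rabs J0 <= N 0%nat * N 1%nat * Rabs J0)
      by (apply Rmult_le_compat_r, Rmult_le_compat; auto).
    assert (2 * Rabs c0 * Rabs (snd (hs 0%nat)) * Rabs (Jw w (fst (hs 1%nat)))
            <= 2 * Rabs c0 * N 0%nat * (Lw * N 1%nat))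
      by (apply Rmult_le_compat; auto; [apply Rmult_le_pos; auto; lra | apply Rmult_le_compat_l; auto; lra]).
    lra.
  - rewrite !Rabs_mult.
    assert (Rabs (snd (hs 0%nat)) * Rabs (snd (hs 1%nat)) <= N 0%nat * N 1%nat)
      by (apply Rmult_le_compat; auto).
    assert (Rabs (snd (hs 0%nat)) * Rabs (snd (hs 1%nat)) * Rabs (Jw w (fst (hs 2%nat)))
            <= N 0%nat * N 1%nat * (Lw * N 2%nat))
      by (apply Rmult_le_compat; auto; apply Rmult_le_pos; auto).
    lra.
  - rewrite Rabs_R0. lra.
Qed.

Lemma quad_form_bound w c0 J0 n hs : 0 < w ->
  Rabs (quad_form w c0 J0 n hs) <= quad_bound w c0 J0 * prodn (fun j => XRnorm (hs j)) n.
Proof.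
  intros Hw. eapply Rle_trans; [apply quad_form_coef_bound, Hw|].
  apply Rmult_le_compat_r; [apply prodn_nonneg; intros; apply XRnorm_nonneg|].
  assert (Hq := quad_bound_nonneg w c0 J0 Hw). unfold quad_bound in Hq |- *.
  assert (0 < / w) by (apply Rinv_0_lt_compat; lra).
  assert (A0 := Rabs_pos J0). assert (A1 := Rabs_pos c0). assert (0 <= c0 ^ 2) by apply pow2_ge_0.
  assert (0 <= c0 ^ 2 * Rabs J0) by (apply Rmult_le_pos; lra).
  assert (0 <= Rabs c0 * Rabs J0) by (apply Rmult_le_pos; lra).
  assert (0 <= c0 ^ 2 * (1 + / w)) by (apply Rmult_le_pos; lra).
  assert (0 <= Rabs c0 * (1 + / w)) by (apply Rmult_le_pos; lra).
  destruct n as [|[|[|[|n]]]]; simpl; lra.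
Qed.

Section PotentialForm.

Variables g1 g2 : nat -> R -> R.
Hypothesis g1_cont : forall n, cont_ext (g1 n).
Hypothesis g2_cont : forall n, cont_ext (g2 n).

Definition potential_form (n : nat) (Hs : nat -> UX) : R :=
  RInt (fun s => g1 n s * prodn (fun j => strain1 (Hs j) s) n
               + g2 n s * prodn (fun j => strain2 (Hs j) s) n) (-1) 0.

Lemma potential_form_ext n Hs Hs' : (forall j, (j < n)%nat -> Hs j = Hs' j) ->
  potential_form n Hs = potential_form n Hs'.
Proof.
  intros H. unfold potential_form. apply RInt_ext. intros s _.
  rewrite (prodn_ext (fun j => strain1 (Hs j) s) (fun j => strain1 (Hs' j) s)),
          (prodn_ext (fun j => strain2 (Hs j) s) (fun j => strain2 (Hs' j) s));
    auto; intros; rewrite H; auto.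
Qed.

Lemma potential_form_multilinear n i Hs x y a : (i < n)%nat ->
  (forall j, inY (Hs j)) -> inY x -> inY y ->
  potential_form n (upd Hs i (Uadd x y))
    = potential_form n (upd Hs i x) + potential_form n (upd Hs i y) /\
  potential_form n (upd Hs i (Uscal a x)) = a * potential_form n (upd Hs i x).
Proof.
  intros Hi HY Hx Hy.
  set (PX := fun s => prodn (fun j => if Nat.eqb j i then 1 else strain1 (Hs j) s) n).
  set (PY := fun s => prodn (fun j => if Nat.eqb j i then 1 else strain2 (Hs j) s) n).
  assert (Hif : forall F : nat -> R -> R, (forall j, cont_ext (F j)) ->
            cont_ext (fun s => prodn (fun j => if Nat.eqb j i then 1 else F j s) n)).
  { intros F HF. apply (cont_ext_prodn (fun j s => if Nat.eqb j i then 1 else F j s)).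
    intros j. destruct (Nat.eqb j i); [apply cont_ext_const | apply HF]. }
  assert (CPX : cont_ext PX) by (apply (Hif (fun j => strain1 (Hs j))); intros; apply strain1_cont_ext; auto).
  assert (CPY : cont_ext PY) by (apply (Hif (fun j => strain2 (Hs j))); intros; apply strain2_cont_ext; auto).
  set (I := fun v s => g1 n s * (strain1 v s * PX s) + g2 n s * (strain2 v s * PY s)).
  assert (Cv : forall v, inY v -> ex_RInt (I v) (-1) 0).
  { intros v Hv. apply cont_ext_ex_RInt, cont_ext_plus; apply cont_ext_mult; auto;
      apply cont_ext_mult; auto; [apply strain1_cont_ext | apply strain2_cont_ext]; auto. }
  assert (Ev : forall v, potential_form n (upd Hs i v) = RInt (I v) (-1) 0).
  { intros v. unfold potential_form. apply RInt_ext. intros s _. unfold I.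
    rewrite (prodn_upd (fun U => strain1 U s)), (prodn_upd (fun U => strain2 U s)) by exact Hi.
    reflexivity. }
  rewrite !Ev. split.
  - rewrite <- RInt_plusR by auto. apply RInt_ext. intros s _. unfold I.
    rewrite strain1_add, strain2_add. reqR. ring.
  - rewrite <- RInt_scalR by auto. apply RInt_ext. intros s _. unfold I.
    rewrite strain1_scal, strain2_scal. reqR. ring.
Qed.

Lemma potential_form_bound n Hs B1 K1 B2 K2 :
  (forall s, -1 <= s <= 0 -> Rabs (g1 n s) <= B1 * K1 ^ n) ->
  (forall s, -1 <= s <= 0 -> Rabs (g2 n s) <= B2 * K2 ^ n) ->
  (forall j, inY (Hs j)) ->
  Rabs (potential_form n Hs)
    <= (B1 * K1 ^ n + B2 * K2 ^ n) * 2 ^ n * prodn (fun j => Unorm (Hs j)) n.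
Proof.
  intros Hb1 Hb2 HY. unfold potential_form. apply RInt_abs_le.
  { apply cont_ext_ex_RInt, cont_ext_plus; apply cont_ext_mult; auto; apply cont_ext_prodn;
      intros j; [apply strain1_cont_ext | apply strain2_cont_ext]; auto. }
  intros s Hs'. eapply Rle_trans; [apply Rabs_triang|]. rewrite !Rabs_mult.
  rewrite Rmult_assoc. set (N := 2 ^ n * prodn (fun j => Unorm (Hs j)) n).
  assert (HN : 0 <= N).
  { apply Rmult_le_pos; [apply pow_le; lra | apply prodn_nonneg; intros; apply Unorm_nonneg]. }
  assert (HP : forall F : nat -> R, (forall j, Rabs (F j) <= 2 * Unorm (Hs j)) -> Rabs (prodn F n) <= N).
  { intros F HF. unfold N. rewrite <- prodn_scal. apply Rabs_prodn_le, HF. }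
  assert (Rabs (g1 n s) * Rabs (prodn (fun j => strain1 (Hs j) s) n) <= B1 * K1 ^ n * N).
  { apply Rmult_le_compat; try apply Rabs_pos; [apply Hb1, Hs'|].
    apply HP. intros j. apply strain1_bound; auto. }
  assert (Rabs (g2 n s) * Rabs (prodn (fun j => strain2 (Hs j) s) n) <= B2 * K2 ^ n * N).
  { apply Rmult_le_compat; try apply Rabs_pos; [apply Hb2, Hs'|].
    apply HP. intros j. apply strain2_bound; auto. }
  nra.
Qed.

End PotentialForm.

Lemma Jfun_Uadd V1 V2 w c U H : 0 < w ->
  analytic_on (fun _ => True) Rplus Rmult Rabs V1 ->
  analytic_on (fun _ => True) Rplus Rmult Rabs V2 -> inY U -> inY H ->
  Jfun V1 V2 w c (Uadd U H)
  = c ^ 2 * (Jw w U + Jw w H)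
    - (RInt (fun s => Derive V1 (strain1 U s + strain1 H s)) (-1) 0
       + RInt (fun s => Derive V2 (strain2 U s + strain2 H s)) (-1) 0).
Proof.
  intros Hw H1 H2 HU HH.
  rewrite Jfun_strain, Jw_add, <- RInt_plusR by first
    [ exact Hw
    | apply cont_ext_ex_RInt, (cont_ext_comp (Derive V1) (fun s => strain1 U s + strain1 H s));
      [apply (analytic_Derive_continuous V1 H1 0) | apply cont_ext_plus; apply strain1_cont_ext; auto]
    | apply cont_ext_ex_RInt, (cont_ext_comp (Derive V2) (fun s => strain2 U s + strain2 H s));
      [apply (analytic_Derive_continuous V2 H2 0) | apply cont_ext_plus; apply strain2_cont_ext; auto] ].
  f_equal. apply RInt_ext. intros s _. rewrite strain1_add, strain2_add. reflexivity.
Qed.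

Section JLocalExpansion.

Variables (V1 V2 : R -> R) (w : R) (U0 : UX) (c0 B1 K1 B2 K2 : R).
Hypothesis w_pos : 0 < w.
Hypothesis V1_analytic : analytic_on (fun _ => True) Rplus Rmult Rabs V1.
Hypothesis V2_analytic : analytic_on (fun _ => True) Rplus Rmult Rabs V2.
Hypothesis U0_Y : inY U0.
Hypotheses (B1_pos : 0 < B1) (K1_pos : 0 < K1) (B2_pos : 0 < B2) (K2_pos : 0 < K2).
Let R0 := 2 * Unorm U0.
Hypothesis V1_est : Cauchy_estimate (Derive V1) B1 K1 (- R0 - 1) (R0 + 1).
Hypothesis V2_est : Cauchy_estimate (Derive V2) B2 K2 (- R0 - 1) (R0 + 1).

Definition coef1 := taylor_coef (Derive V1) (strain1 U0).
Definition coef2 := taylor_coef (Derive V2) (strain2 U0).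

Definition J_coef (n : nat) (hs : nat -> UX * R) : R :=
  quad_form w c0 (Jw w U0) n hs - potential_form coef1 coef2 n (fun j => fst (hs j)).

Definition J_coef_bound (n : nat) : R :=
  quad_bound w c0 (Jw w U0) + (B1 * K1 ^ n + B2 * K2 ^ n) * 2 ^ n.

Definition J_radius : R := Rmin (1 / 2) (/ (4 * (K1 + K2))).

Lemma strain1_U0_bound s : -1 <= s <= 0 -> Rabs (strain1 U0 s) <= R0.
Proof. apply strain1_bound, U0_Y. Qed.

Lemma strain2_U0_bound s : -1 <= s <= 0 -> Rabs (strain2 U0 s) <= R0.
Proof. apply strain2_bound, U0_Y. Qed.

Lemma coef1_cont_ext n : cont_ext (coef1 n).
Proof. apply taylor_coef_cont_ext; [apply analytic_Derive_smooth, V1_analytic | apply strain1_cont_ext, U0_Y]. Qed.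

Lemma coef2_cont_ext n : cont_ext (coef2 n).
Proof. apply taylor_coef_cont_ext; [apply analytic_Derive_smooth, V2_analytic | apply strain2_cont_ext, U0_Y]. Qed.

Lemma J_radius_pos : 0 < J_radius.
Proof. unfold J_radius. apply Rmin_case; [lra | apply Rinv_0_lt_compat; lra]. Qed.

Lemma J_radius_small : J_radius <= 1 / 2 /\ K1 * (2 * J_radius) <= 1 / 2 /\ K2 * (2 * J_radius) <= 1 / 2.
Proof.
  assert (Hr := Rmin_r (1 / 2) (/ (4 * (K1 + K2)))). fold J_radius in Hr.
  assert (Hr0 := J_radius_pos).
  assert (HK : (K1 + K2) * (2 * J_radius) <= 1 / 2).
  { apply Rle_trans with ((K1 + K2) * (2 * / (4 * (K1 + K2)))); [apply Rmult_le_compat_l; lra|].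
    right. field. lra. }
  split; [apply Rmin_l | split; nra].
Qed.

Lemma J_coef_ext n hs hs' : (forall i, (i < n)%nat -> hs i = hs' i) -> J_coef n hs = J_coef n hs'.
Proof.
  intros H. unfold J_coef. rewrite (quad_form_ext w c0 (Jw w U0) n hs hs' H).
  rewrite (potential_form_ext coef1 coef2 n _ (fun j => fst (hs' j))); [reflexivity|].
  intros j Hj. rewrite H; auto.
Qed.

Lemma J_coef_multilinear n i hs x y a : (i < n)%nat ->
  (forall j, XRdom (hs j)) -> XRdom x -> XRdom y ->
  J_coef n (upd hs i (XRadd x y)) = J_coef n (upd hs i x) + J_coef n (upd hs i y) /\
  J_coef n (upd hs i (XRscal a x)) = a * J_coef n (upd hs i x).
Proof.
  intros Hi Hd Hx Hy. unfold J_coef.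
  destruct (quad_form_multilinear w c0 (Jw w U0) n i hs x y a w_pos Hi) as [T1 T2].
  assert (E : forall v, potential_form coef1 coef2 n (fun j => fst (upd hs i v j))
                      = potential_form coef1 coef2 n (upd (fun j => fst (hs j)) i (fst v))).
  { intros v. apply potential_form_ext. intros j _. unfold upd. destruct (Nat.eqb j i); reflexivity. }
  destruct (potential_form_multilinear coef1 coef2 coef1_cont_ext coef2_cont_ext n i
              (fun j => fst (hs j)) (fst x) (fst y) a Hi (fun j => proj1 (Hd j)) (proj1 Hx) (proj1 Hy))
    as [P1 P2].
  rewrite !E, T1, T2. simpl fst. rewrite P1, P2. split; ring.
Qed.

Lemma J_coef_bound_nonneg n : 0 <= J_coef_bound n.
Proof.
  unfold J_coef_bound. apply Rplus_le_le_0_compat; [apply quad_bound_nonneg, w_pos|].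
  apply Rmult_le_pos; [|apply pow_le; lra].
  apply Rplus_le_le_0_compat; apply Rmult_le_pos; try lra; apply pow_le; lra.
Qed.

Lemma J_coef_bounded n hs : (forall j, XRdom (hs j)) ->
  Rabs (J_coef n hs) <= J_coef_bound n * prodn (fun j => XRnorm (hs j)) n.
Proof.
  intros Hd. unfold J_coef, J_coef_bound, Rminus.
  eapply Rle_trans; [apply Rabs_triang|]. rewrite Rabs_Ropp, Rmult_plus_distr_r.
  apply Rplus_le_compat; [apply quad_form_bound, w_pos|].
  eapply Rle_trans.
  { apply (potential_form_bound coef1 coef2 coef1_cont_ext coef2_cont_ext n _ B1 K1 B2 K2).
    - intros s Hs. apply (taylor_coef_bound (Derive V1) B1 K1 R0); auto using strain1_U0_bound.
    - intros s Hs. apply (taylor_coef_bound (Derive V2) B2 K2 R0); auto using strain2_U0_bound.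
    - intros j. apply (Hd j). }
  apply Rmult_le_compat_l.
  - apply Rmult_le_pos; [|apply pow_le; lra].
    apply Rplus_le_le_0_compat; apply Rmult_le_pos; try lra; apply pow_le; lra.
  - apply prodn_le. intros j. split; [apply Unorm_nonneg | apply XRnorm_fst].
Qed.

Lemma ex_series_J_coef_bound : ex_series (fun n => J_coef_bound n * J_radius ^ n).
Proof.
  destruct J_radius_small as (Hr & HK1 & HK2). assert (Hr0 := J_radius_pos).
  set (Q := quad_bound w c0 (Jw w U0)). assert (HQ : 0 <= Q) by apply quad_bound_nonneg, w_pos.
  apply (@ex_series_le R_AbsRing R_CompleteNormedModule _ (fun n => (Q + B1 + B2) * (1 / 2) ^ n)).
  - intros n. change (norm ?x) with (Rabs x).
    rewrite Rabs_pos_eq by (apply Rmult_le_pos; [apply J_coef_bound_nonneg | apply pow_le; lra]).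
    unfold J_coef_bound. fold Q.
    replace ((Q + (B1 * K1 ^ n + B2 * K2 ^ n) * 2 ^ n) * J_radius ^ n)
      with (Q * J_radius ^ n + B1 * (K1 * (2 * J_radius)) ^ n + B2 * (K2 * (2 * J_radius)) ^ n)
      by (rewrite !Rpow_mult_distr; ring).
    assert (J_radius ^ n <= (1 / 2) ^ n) by (apply pow_incr; lra).
    assert ((K1 * (2 * J_radius)) ^ n <= (1 / 2) ^ n) by (apply pow_incr; split; [nra | exact HK1]).
    assert ((K2 * (2 * J_radius)) ^ n <= (1 / 2) ^ n) by (apply pow_incr; split; [nra | exact HK2]).
    assert (Q * J_radius ^ n <= Q * (1 / 2) ^ n) by (apply Rmult_le_compat_l; lra).
    assert (B1 * (K1 * (2 * J_radius)) ^ n <= B1 * (1 / 2) ^ n) by (apply Rmult_le_compat_l; lra).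
    assert (B2 * (K2 * (2 * J_radius)) ^ n <= B2 * (1 / 2) ^ n) by (apply Rmult_le_compat_l; lra).
    lra.
  - apply (ex_series_scal_l (Q + B1 + B2) (fun n => (1 / 2) ^ n)), ex_series_geom.
    rewrite Rabs_pos_eq; lra.
Qed.

Lemma is_series_J_coef H g : inY H -> XRnorm (H, g) < J_radius ->
  is_series (fun n => J_coef n (fun _ => (H, g))) (Jfun V1 V2 w (c0 + g) (Uadd U0 H)).
Proof.
  intros HH Hh. destruct J_radius_small as (Hr & HK1 & HK2).
  assert (HUH : Unorm H < J_radius) by (eapply Rle_lt_trans; [apply (XRnorm_fst (H, g)) | exact Hh]).
  assert (Hrr : 0 <= 2 * J_radius <= 1) by (assert (Hr0 := J_radius_pos); lra).
  assert (B1H : forall s, -1 <= s <= 0 -> Rabs (strain1 H s) <= 2 * J_radius)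
    by (intros s Hs; eapply Rle_trans; [apply strain1_bound | ]; auto; lra).
  assert (B2H : forall s, -1 <= s <= 0 -> Rabs (strain2 H s) <= 2 * J_radius)
    by (intros s Hs; eapply Rle_trans; [apply strain2_bound | ]; auto; lra).
  assert (S1 := is_series_RInt_taylor (Derive V1) B1 K1 R0 (strain1 U0)
                  (analytic_Derive_smooth V1 V1_analytic) B1_pos K1_pos V1_est
                  (strain1_cont_ext U0 U0_Y) strain1_U0_bound _ _ (strain1_cont_ext H HH) Hrr HK1 B1H).
  assert (S2 := is_series_RInt_taylor (Derive V2) B2 K2 R0 (strain2 U0)
                  (analytic_Derive_smooth V2 V2_analytic) B2_pos K2_pos V2_est
                  (strain2_cont_ext U0 U0_Y) strain2_U0_bound _ _ (strain2_cont_ext H HH) Hrr HK2 B2H).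
  assert (HT := is_series_finite4 (fun n => quad_form w c0 (Jw w U0) n (fun _ => (H, g)))).
  specialize (HT ltac:(intros [|[|[|[|n]]]] Hn; [lia..|reflexivity])).
  cbv beta in HT. rewrite quad_form_sum in HT.
  assert (Hall := is_series_minus _ _ _ _ HT (is_series_plus _ _ _ _ S1 S2)).
  rewrite Jfun_Uadd by assumption. eapply is_series_ext; [|exact Hall].
  - intros n.
    assert (E1 : ex_RInt (fun s => coef1 n s * strain1 H s ^ n) (-1) 0)
      by (apply cont_ext_ex_RInt, cont_ext_mult;
          [apply coef1_cont_ext | apply cont_ext_pow, strain1_cont_ext, HH]).
    assert (E2 : ex_RInt (fun s => coef2 n s * strain2 H s ^ n) (-1) 0)
      by (apply cont_ext_ex_RInt, cont_ext_mult;
          [apply coef2_cont_ext | apply cont_ext_pow, strain2_cont_ext, HH]).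
    unfold J_coef, potential_form, minus, plus, opp. simpl. fold coef1 coef2.
    rewrite <- (RInt_plusR _ _ _ _ E1 E2). unfold Rminus. do 2 f_equal.
    apply RInt_ext. intros s _. rewrite !prodn_const. reflexivity.
Qed.

End JLocalExpansion.

Theorem J_analytic V1 V2 w : 0 < w ->
  analytic_on (fun _ => True) Rplus Rmult Rabs V1 ->
  analytic_on (fun _ => True) Rplus Rmult Rabs V2 ->
  analytic_on XRdom XRadd XRscal XRnorm (fun x => Jfun V1 V2 w (snd x) (fst x)).
Proof.
  intros Hw H1 H2 [U0 c0] [HU0 _]. simpl in HU0.
  destruct (analytic_Derive_Cauchy_estimate V1 H1 (- (2 * Unorm U0) - 1) (2 * Unorm U0 + 1))
    as (B1 & K1 & HB1 & HK1 & Hb1).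
  destruct (analytic_Derive_Cauchy_estimate V2 H2 (- (2 * Unorm U0) - 1) (2 * Unorm U0 + 1))
    as (B2 & K2 & HB2 & HK2 & Hb2).
  exists (J_coef V1 V2 w U0 c0), (J_coef_bound w U0 c0 B1 K1 B2 K2), (J_radius K1 K2).
  split; [apply J_radius_pos; auto|].
  split; [apply J_coef_ext|].
  split; [intros n i hs x y a Hi Hd Hx Hy; apply J_coef_multilinear; auto|].
  split; [intros n hs Hd; apply J_coef_bounded; auto|].
  split; [intros n; apply J_coef_bound_nonneg; auto|].
  split; [apply ex_series_J_coef_bound; auto|].
  intros [H g] [HH _] Hh. apply (is_series_J_coef V1 V2 w U0 c0 B1 K1 B2 K2); auto.
Qed.

(** * The Fréchet derivative of J *)

Definition DJ (V1 V2 : R -> R) (w c : R) (U h : UX) : R :=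
  c ^ 2 * Jw w h - RInt (fun s => Derive (Derive V1) (strain1 U s) * strain1 h s
                                + Derive (Derive V2) (strain2 U s) * strain2 h s) (-1) 0.

Lemma Cauchy_estimate_Derive f B K R0 x : Cauchy_estimate f B K (- R0 - 1) (R0 + 1) ->
  Rabs x <= R0 -> Rabs (Derive f x) <= B * K.
Proof.
  intros Hest Hx. apply Rabs_le_between in Hx.
  eapply Rle_trans; [apply (Hest x ltac:(lra) 1%nat) | simpl; lra].
Qed.

Definition lin_rem (V : R -> R) (x d : R) : R := Derive V (x + d) - Derive V x - Derive (Derive V) x * d.

Lemma lin_rem_bound V B K R0 x d :
  analytic_on (fun _ => True) Rplus Rmult Rabs V ->
  Cauchy_estimate (Derive V) B K (- R0 - 1) (R0 + 1) -> Rabs x <= R0 -> Rabs d <= 1 ->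
  Rabs (lin_rem V x d) <= B * K ^ 2 * d ^ 2.
Proof.
  intros HV Hest Hx Hd. apply Rabs_le_between in Hx.
  assert (T := taylor_remainder_bound (Derive V) B K R0 x d 1
                 (analytic_Derive_smooth V HV) Hest ltac:(lra) Hd).
  replace (lin_rem V x d) with (Derive V (x + d) - taylor_poly (Derive V) x d 1)
    by (unfold lin_rem, taylor_poly; simpl; change (fun y => Derive V y) with (Derive V); field).
  eapply Rle_trans; [exact T|]. right. rewrite Rpow_mult_distr, pow2_abs. ring.
Qed.

Lemma lin_rem_cont_ext V x d : analytic_on (fun _ => True) Rplus Rmult Rabs V ->
  cont_ext x -> cont_ext d -> cont_ext (fun s => lin_rem V (x s) (d s)).
Proof.
  intros HV Hx Hd. unfold lin_rem.
  assert (C := fun n => analytic_Derive_continuous V HV n).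
  repeat first [apply cont_ext_minus | apply cont_ext_mult];
    try apply (cont_ext_comp (Derive_n (Derive V) 1)); try apply (cont_ext_comp (Derive V));
    try apply (C 0%nat); try apply (C 1%nat); try apply cont_ext_plus; assumption.
Qed.

Section FrechetDerivative.

Variables (V1 V2 : R -> R) (w c : R) (U : UX).
Hypothesis w_pos : 0 < w.
Hypothesis V1_analytic : analytic_on (fun _ => True) Rplus Rmult Rabs V1.
Hypothesis V2_analytic : analytic_on (fun _ => True) Rplus Rmult Rabs V2.
Hypothesis U_Y : inY U.

Lemma DJ_integrand_cont_ext h : inY h ->
  cont_ext (fun s => Derive (Derive V1) (strain1 U s) * strain1 h s
                   + Derive (Derive V2) (strain2 U s) * strain2 h s).
Proof.
  intros Hh. apply cont_ext_plus; apply cont_ext_mult.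
  - apply (cont_ext_comp (Derive (Derive V1))); [apply (analytic_Derive_continuous V1 V1_analytic 1)|].
    apply strain1_cont_ext, U_Y.
  - apply strain1_cont_ext, Hh.
  - apply (cont_ext_comp (Derive (Derive V2))); [apply (analytic_Derive_continuous V2 V2_analytic 1)|].
    apply strain2_cont_ext, U_Y.
  - apply strain2_cont_ext, Hh.
Qed.

Lemma DJ_bounded_linear : bounded_linear_on inY Uadd Uscal Unorm (DJ V1 V2 w c U).
Proof.
  set (R0 := 2 * Unorm U).
  destruct (analytic_Derive_Cauchy_estimate V1 V1_analytic (- R0 - 1) (R0 + 1)) as (B1 & K1 & HB1 & HK1 & Hb1).
  destruct (analytic_Derive_Cauchy_estimate V2 V2_analytic (- R0 - 1) (R0 + 1)) as (B2 & K2 & HB2 & HK2 & Hb2).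
  assert (Hex := fun h Hh => cont_ext_ex_RInt _ (DJ_integrand_cont_ext h Hh)).
  split; [|split].
  - intros x y Hx Hy. unfold DJ. rewrite Jw_add by exact w_pos.
    rewrite (RInt_ext _ (fun s => (Derive (Derive V1) (strain1 U s) * strain1 x s
                                  + Derive (Derive V2) (strain2 U s) * strain2 x s)
                                 + (Derive (Derive V1) (strain1 U s) * strain1 y s
                                  + Derive (Derive V2) (strain2 U s) * strain2 y s))).
    + rewrite RInt_plusR by auto. ring.
    + intros s _. rewrite strain1_add, strain2_add. reqR. ring.
  - intros a x Hx. unfold DJ. rewrite Jw_scal by exact w_pos.
    rewrite (RInt_ext _ (fun s => a * (Derive (Derive V1) (strain1 U s) * strain1 x s
                                    + Derive (Derive V2) (strain2 U s) * strain2 x s))).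
    + rewrite RInt_scalR by auto. ring.
    + intros s _. rewrite strain1_scal, strain2_scal. reqR. ring.
  - exists (c ^ 2 * (1 + / w) + 2 * (B1 * K1 + B2 * K2)). intros h Hh. unfold DJ, Rminus.
    eapply Rle_trans; [apply Rabs_triang|].
    rewrite Rabs_Ropp, Rabs_mult, (Rabs_pos_eq (c ^ 2)) by apply pow2_ge_0.
    assert (c ^ 2 * Rabs (Jw w h) <= c ^ 2 * ((1 + / w) * Unorm h))
      by (apply Rmult_le_compat_l; [apply pow2_ge_0 | apply Jw_bound, w_pos]).
    assert (Rabs (RInt (fun s => Derive (Derive V1) (strain1 U s) * strain1 h s
                               + Derive (Derive V2) (strain2 U s) * strain2 h s) (-1) 0)
            <= 2 * (B1 * K1 + B2 * K2) * Unorm h).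
    { apply RInt_abs_le; [auto|]. intros s Hs.
      eapply Rle_trans; [apply Rabs_triang|]. rewrite !Rabs_mult.
      assert (Rabs (Derive (Derive V1) (strain1 U s)) * Rabs (strain1 h s) <= B1 * K1 * (2 * Unorm h))
        by (apply Rmult_le_compat; try apply Rabs_pos;
            [apply (Cauchy_estimate_Derive _ _ _ R0), strain1_bound | apply strain1_bound]; auto).
      assert (Rabs (Derive (Derive V2) (strain2 U s)) * Rabs (strain2 h s) <= B2 * K2 * (2 * Unorm h))
        by (apply Rmult_le_compat; try apply Rabs_pos;
            [apply (Cauchy_estimate_Derive _ _ _ R0), strain2_bound | apply strain2_bound]; auto).
      lra. }
    lra.
Qed.

Lemma J_remainder_eq h : inY h ->
  Jfun V1 V2 w c (Uadd U h) - Jfun V1 V2 w c U - DJ V1 V2 w c U h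
  = - RInt (fun s => lin_rem V1 (strain1 U s) (strain1 h s)
                   + lin_rem V2 (strain2 U s) (strain2 h s)) (-1) 0.
Proof.
  intros Hh.
  assert (CG : forall V, analytic_on (fun _ => True) Rplus Rmult Rabs V -> forall x,
            cont_ext x -> cont_ext (fun s => Derive V (x s)))
    by (intros V HV x Hx; apply cont_ext_comp; [apply (analytic_Derive_continuous V HV 0) | exact Hx]).
  assert (HUh := inY_add U h U_Y Hh).
  rewrite !Jfun_strain, Jw_add by exact w_pos. unfold DJ.
  rewrite (RInt_ext (fun s => lin_rem V1 (strain1 U s) (strain1 h s) + lin_rem V2 (strain2 U s) (strain2 h s))
                    (fun s => (Derive V1 (strain1 (Uadd U h) s) + Derive V2 (strain2 (Uadd U h) s))
                              - (Derive V1 (strain1 U s) + Derive V2 (strain2 U s))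
                              - (Derive (Derive V1) (strain1 U s) * strain1 h s
                                 + Derive (Derive V2) (strain2 U s) * strain2 h s)))
    by (intros s _; rewrite strain1_add, strain2_add; unfold lin_rem; reqR; ring).
  rewrite !RInt_minusR; [ring| ..]; apply cont_ext_ex_RInt; repeat first
    [ apply DJ_integrand_cont_ext | apply strain1_cont_ext | apply strain2_cont_ext
    | apply CG | apply cont_ext_minus | apply cont_ext_plus | assumption ].
Qed.

(* Second-order Taylor expansion of V1', V2' along the strains, uniformly in s. *)
Lemma J_remainder_quadratic : exists C, 0 < C /\ forall h, inY h -> Unorm h <= 1 / 2 ->
  Rabs (Jfun V1 V2 w c (Uadd U h) - Jfun V1 V2 w c U - DJ V1 V2 w c U h) <= C * (Unorm h * Unorm h).
Proof.
  set (R0 := 2 * Unorm U).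
  destruct (analytic_Derive_Cauchy_estimate V1 V1_analytic (- R0 - 1) (R0 + 1)) as (B1 & K1 & HB1 & HK1 & Hb1).
  destruct (analytic_Derive_Cauchy_estimate V2 V2_analytic (- R0 - 1) (R0 + 1)) as (B2 & K2 & HB2 & HK2 & Hb2).
  assert (HC1 : 0 < B1 * K1 ^ 2) by (apply Rmult_lt_0_compat; [|apply pow_lt]; lra).
  assert (HC2 : 0 < B2 * K2 ^ 2) by (apply Rmult_lt_0_compat; [|apply pow_lt]; lra).
  exists (4 * (B1 * K1 ^ 2 + B2 * K2 ^ 2)). split; [lra|].
  intros h Hh Hh1. rewrite J_remainder_eq, Rabs_Ropp by exact Hh.
  apply RInt_abs_le.
  { apply cont_ext_ex_RInt, cont_ext_plus; apply lin_rem_cont_ext; auto;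
      first [apply strain1_cont_ext | apply strain2_cont_ext]; assumption. }
  intros s Hs. assert (HN := Unorm_nonneg h).
  assert (Hh1' := strain1_bound h Hh s Hs). assert (Hh2' := strain2_bound h Hh s Hs).
  assert (L1 := lin_rem_bound V1 B1 K1 R0 (strain1 U s) (strain1 h s)
                  V1_analytic Hb1 (strain1_bound U U_Y s Hs) ltac:(lra)).
  assert (L2 := lin_rem_bound V2 B2 K2 R0 (strain2 U s) (strain2 h s)
                  V2_analytic Hb2 (strain2_bound U U_Y s Hs) ltac:(lra)).
  assert (B1 * K1 ^ 2 * strain1 h s ^ 2 <= B1 * K1 ^ 2 * (4 * (Unorm h * Unorm h)))
    by (apply Rmult_le_compat_l; [lra | apply Rabs_le_between in Hh1'; simpl; nra]).
  assert (B2 * K2 ^ 2 * strain2 h s ^ 2 <= B2 * K2 ^ 2 * (4 * (Unorm h * Unorm h)))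
    by (apply Rmult_le_compat_l; [lra | apply Rabs_le_between in Hh2'; simpl; nra]).
  eapply Rle_trans; [apply Rabs_triang | lra].
Qed.

End FrechetDerivative.

Lemma J_Fderiv V1 V2 w c U : 0 < w ->
  analytic_on (fun _ => True) Rplus Rmult Rabs V1 ->
  analytic_on (fun _ => True) Rplus Rmult Rabs V2 ->
  inY U -> is_Fderiv (Jfun V1 V2 w c) U (DJ V1 V2 w c U).
Proof.
  intros Hw H1 H2 HU. split; [apply DJ_bounded_linear; auto|].
  intros eps Heps. destruct (J_remainder_quadratic V1 V2 w c U) as (C & HC & Hq); auto.
  exists (Rmin (1 / 2) (eps / C)). split; [apply Rmin_case; [lra | apply Rdiv_lt_0_compat; lra]|].
  intros h Hh Hhd. assert (HN := Unorm_nonneg h).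
  assert (Hh1 : Unorm h <= 1 / 2) by (assert (H := Rmin_l (1 / 2) (eps / C)); lra).
  assert (HCh : C * Unorm h <= eps).
  { assert (H := Rmin_r (1 / 2) (eps / C)).
    apply (Rmult_le_reg_r (/ C)); [apply Rinv_0_lt_compat, HC|].
    rewrite Rmult_comm, <- Rmult_assoc, Rinv_l, Rmult_1_l by lra. unfold Rdiv in H. lra. }
  eapply Rle_trans; [apply Hq; auto|]. rewrite <- Rmult_assoc.
  apply Rmult_le_compat_r; assumption.
Qed.

Lemma Fderiv_unique f U L1 L2 : is_Fderiv f U L1 -> is_Fderiv f U L2 ->
  forall h, inY h -> L1 h = L2 h.
Proof.
  intros [[_ [S1 _]] D1] [[_ [S2 _]] D2] h Hh.
  destruct (Req_dec (L1 h) (L2 h)) as [E|NE]; [exact E|exfalso].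
  set (D := Rabs (L1 h - L2 h)). assert (HD : 0 < D) by (apply Rabs_pos_lt; lra).
  set (N := Unorm h + 1). assert (HN : 0 < N) by (assert (H := Unorm_nonneg h); unfold N; lra).
  set (e := D / (4 * N)). assert (He : 0 < e) by (apply Rdiv_lt_0_compat; lra).
  destruct (D1 e He) as (d1 & Hd1 & K1). destruct (D2 e He) as (d2 & Hd2 & K2).
  set (t := Rmin d1 d2 / (2 * N)).
  assert (Hd : 0 < Rmin d1 d2) by (apply Rmin_case; lra).
  assert (Ht : 0 < t) by (apply Rdiv_lt_0_compat; lra).
  assert (Hth := inY_scal h t Hh).
  assert (Hn : Unorm (Uscal t h) <= t * N).
  { eapply Rle_trans; [apply Unorm_scal, Hh|]. rewrite Rabs_pos_eq by lra.
    apply Rmult_le_compat_l; unfold N; lra. }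
  assert (HtN : t * N < Rmin d1 d2) by (unfold t; field_simplify; lra).
  specialize (K1 _ Hth ltac:(assert (H := Rmin_l d1 d2); lra)).
  specialize (K2 _ Hth ltac:(assert (H := Rmin_r d1 d2); lra)).
  rewrite (S1 t h Hh) in K1. rewrite (S2 t h Hh) in K2.
  (* both linearizations are within e |t h| of the same increment of f *)
  assert (Habs : t * D <= 2 * e * Unorm (Uscal t h)).
  { unfold D. rewrite <- (Rabs_pos_eq t) at 1 by lra. rewrite <- Rabs_mult.
    replace (t * (L1 h - L2 h))
      with ((f (Uadd U (Uscal t h)) - f U - t * L2 h) - (f (Uadd U (Uscal t h)) - f U - t * L1 h))
      by ring.
    unfold Rminus at 1. eapply Rle_trans; [apply Rabs_triang|]. rewrite Rabs_Ropp. lra. }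
  assert (2 * e * Unorm (Uscal t h) <= 2 * e * (t * N)) by (apply Rmult_le_compat_l; lra).
  assert (2 * e * (t * N) = t * D / 2) by (unfold e; field; lra).
  assert (0 < t * D) by (apply Rmult_lt_0_compat; lra). lra.
Qed.

Lemma is_Fderiv_ext f U L L' : is_Fderiv f U L -> (forall h, inY h -> L h = L' h) ->
  is_Fderiv f U L'.
Proof.
  intros [[A [S [M HM]]] D] E. split; [split; [|split]|].
  - intros x y Hx Hy. rewrite <- !E; auto. apply inY_add; auto.
  - intros a x Hx. rewrite <- !E; auto. apply inY_scal; auto.
  - exists M. intros x Hx. rewrite <- E; auto.
  - intros eps Heps. destruct (D eps Heps) as (d & Hd & K). exists d. split; auto.
    intros h Hh Hn. rewrite <- E; auto.
Qed.

(** * Conservation of J along the vector field F *)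

Definition ext_C1 (P Q : R -> R) (s : R) : R := P (clamp s) + Q (clamp s) * (s - clamp s).

Lemma ext_C1_eq P Q s : -1 <= s <= 1 -> ext_C1 P Q s = P s.
Proof. intros. unfold ext_C1. rewrite clamp_id by auto. ring. Qed.

Lemma clamp_step s t : Rabs (t - clamp t) <= Rabs (t - s) \/ clamp t = clamp s.
Proof.
  unfold clamp, Rmax, Rmin.
  repeat destruct Rle_dec; try (right; lra); left; unfold Rabs; repeat destruct Rcase_abs; lra.
Qed.

Lemma ext_C1_is_derive P Q : cont_on_I Q -> deriv_on_I P Q ->
  forall s, is_derive (ext_C1 P Q) s (extI Q s).
Proof.
  intros HQ HP s. apply is_derive_Reals. intros eps Heps.
  destruct (HP (clamp s) (clamp_in s) (eps / 4)) as (d1 & Hd1 & K1); [lra|].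
  destruct (HQ (clamp s) (clamp_in s) (eps / 4)) as (d2 & Hd2 & K2); [lra|].
  assert (Hd : 0 < Rmin d1 d2) by (apply Rmin_case; lra).
  exists (mkposreal _ Hd). simpl. intros h Hh0 Hh.
  assert (Hh1 : Rabs h < d1) by (eapply Rlt_le_trans; [exact Hh | apply Rmin_l]).
  assert (Hh2 : Rabs h < d2) by (eapply Rlt_le_trans; [exact Hh | apply Rmin_r]).
  set (t := s + h).
  assert (Hct : Rabs (clamp t - clamp s) <= Rabs h)
    by (replace h with (t - s) by (unfold t; ring); apply clamp_lipschitz).
  assert (E : ext_C1 P Q t - ext_C1 P Q s - extI Q s * h =
     (P (clamp t) - P (clamp s) - Q (clamp s) * (clamp t - clamp s))
     + (Q (clamp t) - Q (clamp s)) * (t - clamp t)) by (unfold ext_C1, extI, t; ring).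
  assert (B1 : Rabs (P (clamp t) - P (clamp s) - Q (clamp s) * (clamp t - clamp s)) <= eps / 4 * Rabs h).
  { eapply Rle_trans; [apply K1; [apply clamp_in | lra] | apply Rmult_le_compat_l; lra]. }
  assert (B2 : Rabs ((Q (clamp t) - Q (clamp s)) * (t - clamp t)) <= eps / 4 * Rabs h).
  { rewrite Rabs_mult. destruct (clamp_step s t) as [Ha | ->].
    - assert (Rabs (Q (clamp t) - Q (clamp s)) < eps / 4) by (apply K2; [apply clamp_in | lra]).
      replace (t - s) with h in Ha by (unfold t; ring).
      apply Rmult_le_compat; try apply Rabs_pos; lra.
    - rewrite Rminus_eq_0, Rabs_R0, Rmult_0_l. apply Rmult_le_pos; [lra | apply Rabs_pos]. }
  assert (Hha : 0 < Rabs h) by (apply Rabs_pos_lt; auto).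
  replace ((ext_C1 P Q t - ext_C1 P Q s) / h - extI Q s)
    with ((ext_C1 P Q t - ext_C1 P Q s - extI Q s * h) / h) by (field; auto).
  unfold Rdiv. rewrite Rabs_mult, Rabs_inv, E.
  apply (Rmult_lt_reg_r (Rabs h)); [exact Hha|]. rewrite Rmult_assoc, Rinv_l, Rmult_1_r by lra.
  eapply Rle_lt_trans; [apply Rabs_triang|]. assert (0 < eps * Rabs h) by (apply Rmult_lt_0_compat; lra). lra.
Qed.

Section Conservation.

Variables (V1 V2 : R -> R) (w c : R) (U : UX) (Q1 Q2 : R -> R).
Hypothesis w_pos : 0 < w.
Hypothesis c_neq0 : c <> 0.
Hypothesis V1_analytic : analytic_on (fun _ => True) Rplus Rmult Rabs V1.
Hypothesis V2_analytic : analytic_on (fun _ => True) Rplus Rmult Rabs V2.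
Hypothesis U_X : inX U.
Hypotheses (Q1_cont : cont_on_I Q1) (Q2_cont : cont_on_I Q2).
Hypotheses (P1_deriv : deriv_on_I (P1 U) Q1) (P2_deriv : deriv_on_I (P2 U) Q2).

Let X1 s := ext_C1 (P2 U) Q2 (s + 1) - ext_C1 (P1 U) Q1 s.
Let X2 s := ext_C1 (P1 U) Q1 (s + 1) - ext_C1 (P2 U) Q2 s.
Let dX1 s := extI Q2 (s + 1) - extI Q1 s.
Let dX2 s := extI Q1 (s + 1) - extI Q2 s.
Let phi s := Derive V1 (X1 s) + Derive V2 (X2 s).
Let dphi s := Derive (Derive V1) (X1 s) * dX1 s + Derive (Derive V2) (X2 s) * dX2 s.

Lemma is_derive_shift1 (f : R -> R) x l : is_derive f (x + 1) l -> is_derive (fun s => f (s + 1)) x l.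
Proof.
  intros H. replace l with (scal 1 l) by (unfold scal; simpl; unfold mult; simpl; ring).
  apply (is_derive_comp f (fun s => s + 1)); [exact H|]. auto_derive; auto; ring.
Qed.

Lemma is_derive_strain_path s : is_derive X1 s (dX1 s) /\ is_derive X2 s (dX2 s).
Proof.
  split.
  - apply (is_derive_minus (fun s => ext_C1 (P2 U) Q2 (s + 1)) (ext_C1 (P1 U) Q1)).
    + apply (is_derive_shift1 (ext_C1 (P2 U) Q2)), ext_C1_is_derive; assumption.
    + apply ext_C1_is_derive; assumption.
  - apply (is_derive_minus (fun s => ext_C1 (P1 U) Q1 (s + 1)) (ext_C1 (P2 U) Q2)).
    + apply (is_derive_shift1 (ext_C1 (P1 U) Q1)), ext_C1_is_derive; assumption.
    + apply ext_C1_is_derive; assumption.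
Qed.

Lemma is_derive_phi s : is_derive phi s (dphi s).
Proof.
  destruct (is_derive_strain_path s) as [D1 D2].
  apply (is_derive_plus (fun s => Derive V1 (X1 s)) (fun s => Derive V2 (X2 s))).
  - replace (Derive (Derive V1) (X1 s) * dX1 s) with (scal (dX1 s) (Derive (Derive V1) (X1 s)))
      by apply Rmult_comm.
    apply (is_derive_comp (Derive V1) X1); [apply Derive_correct, (analytic_Derive_smooth V1 V1_analytic 0) | exact D1].
  - replace (Derive (Derive V2) (X2 s) * dX2 s) with (scal (dX2 s) (Derive (Derive V2) (X2 s)))
      by apply Rmult_comm.
    apply (is_derive_comp (Derive V2) X2); [apply Derive_correct, (analytic_Derive_smooth V2 V2_analytic 0) | exact D2].
Qed.

Lemma dphi_continuous s : continuous dphi s.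
Proof.
  assert (cQ1 := extI_continuous Q1 Q1_cont). assert (cQ2 := extI_continuous Q2 Q2_cont).
  assert (cQs : forall Q, (forall x, continuous (extI Q) x) -> continuous (fun s => extI Q (s + 1)) s).
  { intros Q HQ. apply (continuous_comp (fun s => s + 1) (extI Q)); [|apply HQ].
    apply (continuous_plus (fun s => s) (fun _ => 1)); [apply continuous_id | apply continuous_const]. }
  assert (cX : forall X dX, (forall s, is_derive X s (dX s)) -> continuous X s)
    by (intros X dX HX; apply (@ex_derive_continuous R_AbsRing R_NormedModule); eexists; apply HX).
  apply (continuous_plus (fun s => Derive (Derive V1) (X1 s) * dX1 s) (fun s => Derive (Derive V2) (X2 s) * dX2 s)).
  - apply (continuous_mult (fun s => Derive (Derive V1) (X1 s)) dX1).
    + apply (continuous_comp X1 (Derive (Derive V1))); [|apply (analytic_Derive_continuous V1 V1_analytic 1)].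
      apply (cX _ dX1). intros; apply is_derive_strain_path.
    + apply (continuous_minus (fun s => extI Q2 (s + 1)) (extI Q1)); auto.
  - apply (continuous_mult (fun s => Derive (Derive V2) (X2 s)) dX2).
    + apply (continuous_comp X2 (Derive (Derive V2))); [|apply (analytic_Derive_continuous V2 V2_analytic 1)].
      apply (cX _ dX2). intros; apply is_derive_strain_path.
    + apply (continuous_minus (fun s => extI Q1 (s + 1)) (extI Q2)); auto.
Qed.

(* Fundamental theorem of calculus: the integral in DJ U (F U) telescopes to boundary terms of phi. *)
Lemma DJ_Ffield : DJ V1 V2 w c U (Ffield V1 V2 w c U Q1 Q2) = 0.
Proof.
  destruct U_X as [HY [E1 E2]].
  assert (HI := is_RInt_derive phi dphi (-1) 0 (fun x _ => is_derive_phi x) (fun x _ => dphi_continuous x)).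
  apply is_RInt_unique in HI. unfold DJ.
  rewrite (RInt_ext _ dphi).
  2: { intros s Hs. rewrite Rmin_left, Rmax_right in Hs by lra.
       unfold dphi, X1, X2, dX1, dX2, strain1, strain2. simpl.
       rewrite !ext_C1_eq, !extI_eq by lra. reflexivity. }
  rewrite HI. unfold phi, X1, X2. rewrite !ext_C1_eq by lra.
  unfold minus, plus, opp; simpl.
  replace (0 + 1) with 1 by ring. replace (-1 + 1) with 0 by ring.
  rewrite E1, E2. unfold Jw; simpl. field. split; [exact c_neq0 | lra].
Qed.

End Conservation.

(** * The derivative at 0 and the symmetries of J *)

Lemma Derive_0_of_expansion (g W : R -> R) a b : continuous g 0 ->
  (forall r, g r = a * r + b * r ^ 2 + W r) -> is_lim (fun r => W r / r ^ 2) 0 0 ->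
  Derive g 0 = a.
Proof.
  intros Hg Hexp HW.
  assert (Hq : is_lim (fun h => a + b * h + W h / h ^ 2 * h) 0 a).
  { replace (Finite a) with (Finite (a + b * 0 + 0 * 0)) by (f_equal; ring).
    apply is_lim_plus'; [apply is_lim_plus'; [apply is_lim_const | apply (is_lim_scal_l _ b _ 0), is_lim_id]|].
    apply (is_lim_mult _ _ _ 0 0); [exact HW | apply is_lim_id | exact I]. }
  assert (Hnear : forall P : R -> Prop, (forall h, h <> 0 -> P h) -> Rbar_locally' 0 P)
    by (intros P HP; exists (mkposreal 1 Rlt_0_1); intros h _ Hh; apply HP, Hh).
  assert (g0 : g 0 = 0).
  { assert (L1 : is_lim g 0 (g 0)) by (apply is_lim_continuity, continuity_pt_filterlim, Hg).
    assert (L2 : is_lim g 0 0).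
    { apply (is_lim_ext_loc (fun h => h * (a + b * h + W h / h ^ 2 * h))).
      - apply Hnear. intros h Hh. rewrite Hexp. field. exact Hh.
      - assert (Hm := is_lim_mult (fun h => h) _ 0 0 a (is_lim_id 0) Hq I).
        simpl in Hm. rewrite Rmult_0_l in Hm. exact Hm. }
    apply is_lim_unique in L1, L2. rewrite L1 in L2. injection L2. auto. }
  unfold Derive. replace (Lim _ 0) with (Finite a); [reflexivity|].
  symmetry. apply is_lim_unique. eapply is_lim_ext_loc; [apply Hnear | exact Hq].
  intros h Hh. cbv beta. rewrite Rplus_0_l, g0, Hexp. field. exact Hh.
Qed.

Lemma analytic_second_Derive_0 V W a b : analytic_on (fun _ => True) Rplus Rmult Rabs V ->
  (forall r, is_derive V r (a * r + b * r ^ 2 + W r)) -> is_lim (fun r => W r / r ^ 2) 0 0 ->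
  Derive (Derive V) 0 = a.
Proof.
  intros HV Hd HW. apply (Derive_0_of_expansion _ W a b); [|intros r; apply is_derive_unique, Hd | exact HW].
  apply (analytic_Derive_continuous V HV 0).
Qed.

Lemma RInt_shift1 P Q k : cont_on_I P -> cont_on_I Q ->
  RInt (fun s => k * P (s + 1) + Q (s + 1)) (-1) 0 = RInt (fun s => k * P s + Q s) 0 1.
Proof.
  intros HP HQ.
  assert (Hex : ex_RInt (fun s => k * P s + Q s) (1 * -1 + 1) (1 * 0 + 1)).
  { replace (1 * -1 + 1) with 0 by ring. replace (1 * 0 + 1) with 1 by ring.
    apply (ex_RInt_ext (fun s => k * extI P s + extI Q s)).
    - intros x Hx. rewrite Rmin_left, Rmax_right in Hx by lra. rewrite !extI_eq by lra. reflexivity.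
    - apply (@ex_RInt_continuous R_CompleteNormedModule). intros z _.
      apply (continuous_plus (fun s => k * extI P s) (extI Q)); [|apply extI_continuous, HQ].
      apply (continuous_mult (fun _ => k) (extI P)); [apply continuous_const | apply extI_continuous, HP]. }
  assert (HC := RInt_comp_lin (fun s => k * P s + Q s) 1 1 (-1) 0 Hex).
  replace (1 * -1 + 1) with 0 in HC by ring. replace (1 * 0 + 1) with 1 in HC by ring.
  rewrite <- HC. apply RInt_ext. intros x _.
  unfold scal; simpl; unfold mult; simpl. rewrite !Rmult_1_l. reqR. ring.
Qed.

Lemma DJ_U0 V1 V2 w c kappa h : 0 < w -> inY h ->
  Derive (Derive V1) 0 = 1 -> Derive (Derive V2) 0 = kappa ->
  DJ V1 V2 w c U0 h = c ^ 2 * xi1 h + c ^ 2 / w * xi2 h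
                      + RInt (fun s => P1 h s + kappa * P2 h s) (-1) 0
                      - RInt (fun s => kappa * P1 h s + P2 h s) 0 1.
Proof.
  intros Hw [Hh1 Hh2] DD1 DD2. unfold DJ.
  rewrite (RInt_ext _ (fun s => (kappa * P1 h (s + 1) + P2 h (s + 1)) - (P1 h s + kappa * P2 h s))).
  2: { intros s _. unfold strain1, strain2. simpl. rewrite !Rminus_eq_0, DD1, DD2. reqR. ring. }
  rewrite RInt_minusR, RInt_shift1 by first
    [ assumption
    | apply cont_ext_ex_RInt, (cont_ext_plus (fun s => kappa * P1 h (s + 1)) (fun s => P2 h (s + 1)));
      [apply (cont_ext_mult (fun _ => kappa)); [apply cont_ext_const|] | ]; apply cont_ext_of_I_shift; assumption
    | apply cont_ext_ex_RInt, (cont_ext_plus (P1 h) (fun s => kappa * P2 h s));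
      [| apply (cont_ext_mult (fun _ => kappa)); [apply cont_ext_const|]]; apply cont_ext_of_I; assumption ].
  unfold Jw. field. lra.
Qed.

Lemma Jfun_SM V w c U : analytic_on (fun _ => True) Rplus Rmult Rabs V -> inY U ->
  Jfun V V w c (SM U) = Jfun V V w c U.
Proof.
  intros HV HU. rewrite !Jfun_strain. f_equal.
  rewrite <- (RInt_reflect (fun t => Derive V (strain1 U t) + Derive V (strain2 U t))).
  - apply RInt_ext. intros s _. unfold strain1, strain2, SM. simpl.
    replace (- (s + 1)) with (- s - 1) by ring. replace (- s - 1 + 1) with (- s) by ring.
    rewrite Rplus_comm. f_equal; f_equal; ring.
  - apply cont_ext_plus; apply cont_ext_comp; try apply (analytic_Derive_continuous V HV 0);
      [apply strain1_cont_ext | apply strain2_cont_ext]; exact HU.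
Qed.

Lemma Jfun_SK V1 V2 c U :
  analytic_on (fun _ => True) Rplus Rmult Rabs V1 -> analytic_on (fun _ => True) Rplus Rmult Rabs V2 ->
  inY U -> Jfun V1 V2 1 c (SK U) = Jfun V1 V2 1 c U.
Proof.
  intros H1 H2 HU. rewrite !Jfun_strain. f_equal.
  - unfold Jw; simpl. field.
  - rewrite <- (RInt_reflect (fun t => Derive V1 (strain1 U t) + Derive V2 (strain2 U t))).
    + apply RInt_ext. intros s _. unfold strain1, strain2, SK. simpl.
      replace (- (s + 1)) with (- s - 1) by ring. replace (- s - 1 + 1) with (- s) by ring.
      f_equal; f_equal; ring.
    + apply cont_ext_plus; apply cont_ext_comp;
        [apply (analytic_Derive_continuous V1 H1 0) | apply strain1_cont_ext
        | apply (analytic_Derive_continuous V2 H2 0) | apply strain2_cont_ext]; exact HU.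
Qed.

Lemma Jfun_shift_chi0 V1 V2 w c U mu : Jfun V1 V2 w c (Uadd U (Uscal mu chi0)) = Jfun V1 V2 w c U.
Proof.
  rewrite !Jfun_strain. f_equal.
  - unfold Jw; simpl. unfold Rdiv. ring.
  - apply RInt_ext. intros s _. unfold strain1, strain2; simpl. do 2 f_equal; ring.
Qed.

Lemma Jfun_sub_speed V1 V2 w c c' U :
  Jfun V1 V2 w c U - Jfun V1 V2 w c' U = (c ^ 2 - c' ^ 2) * Jw w U.
Proof. rewrite !Jfun_strain. ring. Qed.


Theorem proposition3p10 (w kappa beta c : R) (V1 V2 W1 W2 : R -> R) :
  0 < w -> 0 < kappa -> c <> 0 ->
  analytic_on (fun _ => True) Rplus Rmult Rabs V1 ->
  analytic_on (fun _ => True) Rplus Rmult Rabs V2 ->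
  (forall r, is_derive V1 r (r + r ^ 2 + W1 r)) ->
  (forall r, is_derive V2 r (kappa * r + beta * r ^ 2 + W2 r)) ->
  is_lim (fun r => W1 r / r ^ 2) 0 0 ->
  is_lim (fun r => W2 r / r ^ 2) 0 0 ->
  (* (i) *)
  (analytic_on XRdom XRadd XRscal XRnorm (fun x => Jfun V1 V2 w (snd x) (fst x)) /\
   forall U Q1 Q2, inX U -> cont_on_I Q1 -> cont_on_I Q2 ->
     deriv_on_I (P1 U) Q1 -> deriv_on_I (P2 U) Q2 ->
     (exists L, is_Fderiv (Jfun V1 V2 w c) U L) /\
     (forall L, is_Fderiv (Jfun V1 V2 w c) U L -> L (Ffield V1 V2 w c U Q1 Q2) = 0)) /\
  (* (ii) *)
  is_Fderiv (Jfun V1 V2 w c) U0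
    (fun U => c ^ 2 * xi1 U + c ^ 2 / w * xi2 U
              + RInt (fun s => P1 U s + kappa * P2 U s) (-1) 0
              - RInt (fun s => kappa * P1 U s + P2 U s) 0 1) /\
  (* (iii) *)
  (V1 = V2 -> forall U, inX U -> Jfun V1 V2 w c (SM U) = Jfun V1 V2 w c U) /\
  (w = 1 -> forall U, inX U -> Jfun V1 V2 1 c (SK U) = Jfun V1 V2 1 c U) /\
  (* (iv) *)
  (forall U mu, inX U -> Jfun V1 V2 w c (Uadd U (Uscal mu chi0)) = Jfun V1 V2 w c U) /\
  (* (v) *)
  bounded_linear_on inX Uadd Uscal Unorm (Jw w) /\
  (forall U c', inX U -> Jfun V1 V2 w c U - Jfun V1 V2 w c' U = (c ^ 2 - c' ^ 2) * Jw w U).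
Proof.
  intros Hw Hk Hc H1 H2 HV1 HV2 HW1 HW2.
  assert (DD1 : Derive (Derive V1) 0 = 1).
  { apply (analytic_second_Derive_0 V1 W1 1 1 H1); [|exact HW1].
    intros r. replace (1 * r + 1 * r ^ 2 + W1 r) with (r + r ^ 2 + W1 r) by ring. apply HV1. }
  assert (DD2 : Derive (Derive V2) 0 = kappa) by exact (analytic_second_Derive_0 V2 W2 kappa beta H2 HV2 HW2).
  split; [split|split; [|split; [|split; [|split; [|split]]]]].
  - apply J_analytic; assumption.
  - intros U Q1 Q2 HU C1 C2 D1 D2.
    assert (HJ := J_Fderiv V1 V2 w c U Hw H1 H2 (proj1 HU)).
    split; [exists (DJ V1 V2 w c U); exact HJ|].
    intros L HL. rewrite (Fderiv_unique _ _ _ _ HL HJ (Ffield V1 V2 w c U Q1 Q2) (conj C1 C2)).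
    apply DJ_Ffield; assumption.
  - apply (is_Fderiv_ext _ _ (DJ V1 V2 w c U0)); [apply J_Fderiv; auto using inY_U0|].
    intros h Hh. apply DJ_U0; assumption.
  - intros <- U HU. apply Jfun_SM; [exact H1 | apply HU].
  - intros _ U HU. apply Jfun_SK; [exact H1 | exact H2 | apply HU].
  - intros U mu _. apply Jfun_shift_chi0.
  - apply Jw_bounded_linear, Hw.
  - intros U c' _. apply Jfun_sub_speed.
Qed.
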